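(* Let $\mathbb{K}\in\{\mathbb{R},\mathbb{C}\}$, $d,m,n\ge1$ with $(m,n)\ne(1,1)$ and $d(\mathbb{K})mn\ge4$. Then $\mathrm{Q}^{d,m}_n(\mathbb{K})$ is simply connected.
   Context: $d(\mathbb{K})=\dim_\mathbb{R}\mathbb{K}$. $\mathrm{Q}^{d,m}_n(\mathbb{K})$ is the space of $m$-tuples $(f_1,\dots,f_m)$ of monic degree-$d$ polynomials with coefficients in $\mathbb{K}$ having no common real root of multiplicity $\ge n$ (common non-real roots of any multiplicity allowed), topologized as a subspace of $\mathbb{K}^{dm}$ via coefficients. *)

From Stdlib Require Import Reals List Arith.
Open Scope R_scope.

Definition C : Type := (R * R)%type.
Definition Cadd (a b : C) : C := (fst a + fst b, snd a + snd b).
Definition Csub (a b : C) : C := (fst a - fst b, snd a - snd b).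
Definition Cmul (a b : C) : C :=
  (fst a * fst b - snd a * snd b, fst a * snd b + snd a * fst b).
Definition C0 : C := (0, 0).
Definition C1 : C := (1, 0).
Definition RtoC (t : R) : C := (t, 0).
Fixpoint Cpow (z : C) (k : nat) : C :=
  match k with O => C1 | S k' => Cmul z (Cpow z k') end.

(** Evaluation of the polynomial with coefficient list b = [b_0; b_1; ...]. *)
Fixpoint peval (b : list C) (z : C) : C :=
  match b with nil => C0 | c :: b' => Cadd c (Cmul z (peval b' z)) end.

Inductive Kfield := KR | KC.
Definition dK (K : Kfield) : nat := match K with KR => 1%nat | KC => 2%nat end.
Definition inK (K : Kfield) (c : C) : Prop :=
  match K with KR => snd c = 0 | KC => True end.

(** * Coordinates: a point of K^{dm} ~ R^{d(K) d m} is x : nat -> R (only the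
    first d(K)*d*m coordinates matter).  Coefficient i (i < d) of polynomial j
    (j < m) is stored at index j*d+i (real case) or at 2(j*d+i), 2(j*d+i)+1
    (real and imaginary parts, complex case). *)
Definition coef (K : Kfield) (d : nat) (x : nat -> R) (j i : nat) : C :=
  match K with
  | KR => (x (j * d + i)%nat, 0)
  | KC => (x (2 * (j * d + i))%nat, x (2 * (j * d + i) + 1)%nat)
  end.

Definition fpoly (K : Kfield) (d : nat) (x : nat -> R) (j : nat) (z : C) : C :=
  Cadd (Cpow z d) (peval (map (coef K d x j) (seq 0 d)) z).

Definition root_mult_ge (K : Kfield) (f : C -> C) (t : C) (n : nat) : Prop :=
  exists b : list C, Forall (inK K) b /\
    forall z : C, f z = Cmul (Cpow (Csub z t) n) (peval b z).

Definition Qspace (K : Kfield) (d m n : nat) (x : nat -> R) : Prop :=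
  ~ (exists t : R, forall j, (j < m)%nat -> root_mult_ge K (fpoly K d x j) (RtoC t) n).

Definition eqN (N : nat) (x y : nat -> R) : Prop := forall i, (i < N)%nat -> x i = y i.

Definition in01 (s : R) : Prop := 0 <= s <= 1.

Definition cont_path (N : nat) (g : R -> nat -> R) : Prop :=
  forall s0, in01 s0 -> forall eps, eps > 0 -> exists delta, delta > 0 /\
    forall s, in01 s -> Rabs (s - s0) < delta ->
      forall i, (i < N)%nat -> Rabs (g s i - g s0 i) < eps.

Definition cont_square (N : nat) (H : R -> R -> nat -> R) : Prop :=
  forall s0 u0, in01 s0 -> in01 u0 -> forall eps, eps > 0 -> exists delta, delta > 0 /\
    forall s u, in01 s -> in01 u -> Rabs (s - s0) < delta -> Rabs (u - u0) < delta ->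
      forall i, (i < N)%nat -> Rabs (H s u i - H s0 u0 i) < eps.

Definition path_in (N : nat) (S : (nat -> R) -> Prop) (g : R -> nat -> R) : Prop :=
  cont_path N g /\ forall s, in01 s -> S (g s).

Definition simply_connected (N : nat) (S : (nat -> R) -> Prop) : Prop :=
  (exists x, S x) /\
  (forall x y, S x -> S y -> exists g, path_in N S g /\ eqN N (g 0) x /\ eqN N (g 1) y) /\
  (forall g, path_in N S g -> eqN N (g 0) (g 1) ->
     exists H : R -> R -> nat -> R,
       cont_square N H /\
       (forall s u, in01 s -> in01 u -> S (H s u)) /\
       (forall s, in01 s -> eqN N (H s 0) (g s) /\ eqN N (H s 1) (g 0)) /\
       (forall u, in01 u -> eqN N (H 0 u) (g 0) /\ eqN N (H 1 u) (g 0))).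

(** A point of K^{dm} lies outside Q^{d,m}_n(K) exactly when, for some real t, the first
    n Taylor coefficients at t of every f_j vanish.  When n <= d these equations can be
    solved for the coefficient slots of degree < n: once the other coordinates and t are
    fixed, the vanishing happens for exactly one value of those slots.  Perturbing
    d(K) m n >= 4 such real slots by w, a family of points depending Lipschitz-continuously
    on three real parameters (two barycentric coordinates of a triangle, plus the root t)
    can only become bad for w in the Lipschitz image of a 3-dimensional box, which cannot
    contain a whole 4-dimensional cube (counting grid points).  So edges and triangles can
    be pushed off the bad set by a small generic w.  Two points of Q are joined through a
    perturbed midpoint; a loop is replaced by a nearby piecewise-linear loop whose vertices
    are perturbed one by one, the fan of triangles from the base point giving the
    null-homotopy, and the two loops are joined by the straight homotopy, which stays in Q
    because a positive lower bound on a Lipschitz "defect" function keeps Q open near the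
    loop.  When n > d no monic polynomial of degree d has a root of multiplicity n, so Q is
    the whole space. *)

From Stdlib Require Import Reals List Arith Lia Lra Bool.
From Stdlib Require Import Classical ClassicalEpsilon FunctionalExtensionality.
Open Scope R_scope.

(** * Complex arithmetic and Taylor expansions *)

Lemma Cext (a b : C) : fst a = fst b -> snd a = snd b -> a = b.
Proof. destruct a, b; simpl; intros; subst; auto. Qed.

Ltac cring := apply Cext; unfold Cadd, Cmul, Csub, C0, C1, RtoC; simpl; ring.

Definition Copp (a : C) : C := (- fst a, - snd a).

(* The l^1 norm on R^2 avoids square roots and is equivalent to the modulus. *)
Definition cnorm (z : C) : R := Rabs (fst z) + Rabs (snd z).

Lemma cnorm_nonneg z : 0 <= cnorm z.
Proof. unfold cnorm; pose proof (Rabs_pos (fst z)); pose proof (Rabs_pos (snd z)); lra. Qed.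

Lemma cnorm_add a b : cnorm (Cadd a b) <= cnorm a + cnorm b.
Proof.
  unfold cnorm, Cadd; simpl.
  pose proof (Rabs_triang (fst a) (fst b)); pose proof (Rabs_triang (snd a) (snd b)); lra.
Qed.

Lemma cnorm_sub a b : cnorm (Csub a b) <= cnorm a + cnorm b.
Proof.
  unfold cnorm, Csub; simpl.
  pose proof (Rabs_triang (fst a) (- fst b)); pose proof (Rabs_triang (snd a) (- snd b)).
  rewrite !Rabs_Ropp in *. unfold Rminus. lra.
Qed.

Lemma cnorm_mul a b : cnorm (Cmul a b) <= cnorm a * cnorm b.
Proof.
  unfold cnorm, Cmul; destruct a as [a1 a2], b as [b1 b2]; simpl.
  pose proof (Rabs_triang (a1 * b1) (- (a2 * b2))).
  pose proof (Rabs_triang (a1 * b2) (a2 * b1)).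
  rewrite Rabs_Ropp in *. rewrite !Rabs_mult in *. unfold Rminus.
  pose proof (Rabs_pos a1); pose proof (Rabs_pos a2); pose proof (Rabs_pos b1); pose proof (Rabs_pos b2).
  nra.
Qed.

Lemma cnorm_RtoC_mul h z : cnorm (Cmul (RtoC h) z) = Rabs h * cnorm z.
Proof.
  unfold cnorm, Cmul, RtoC; simpl.
  replace (h * fst z - 0 * snd z) with (h * fst z) by ring.
  replace (h * snd z + 0 * fst z) with (h * snd z) by ring.
  rewrite !Rabs_mult. ring.
Qed.

Lemma cnorm_RtoC h : cnorm (RtoC h) = Rabs h.
Proof. unfold cnorm, RtoC; simpl. rewrite Rabs_R0. ring. Qed.

Lemma Rabs_eq_0 x : Rabs x = 0 -> x = 0.
Proof. intros H; destruct (Req_dec x 0); auto. exfalso; apply (Rabs_no_R0 x); auto. Qed.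

Lemma cnorm_eq_0 z : cnorm z = 0 -> z = C0.
Proof.
  unfold cnorm; intros H. pose proof (Rabs_pos (fst z)); pose proof (Rabs_pos (snd z)).
  apply Cext; simpl; apply Rabs_eq_0; lra.
Qed.

Lemma cnorm_C0 : cnorm C0 = 0.
Proof. unfold cnorm, C0; simpl; rewrite Rabs_R0; ring. Qed.

Lemma cnorm_pow_RtoC h k : cnorm (Cpow (RtoC h) k) = Rabs h ^ k.
Proof.
  induction k; simpl.
  - unfold cnorm, C1; simpl. rewrite Rabs_R0, Rabs_R1; ring.
  - rewrite cnorm_RtoC_mul, IHk; ring.
Qed.

Fixpoint synth_div (t : C) (p : list C) : list C * C :=
  match p with
  | nil => (nil, C0)
  | c :: p' => match p' with
               | nil => (nil, c)
               | _ => let qr := synth_div t p' in (snd qr :: fst qr, Cadd c (Cmul t (snd qr)))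
               end
  end.

Lemma synth_div_spec t p z :
  peval p z = Cadd (Cmul (Csub z t) (peval (fst (synth_div t p)) z)) (snd (synth_div t p)).
Proof.
  induction p as [|c p IH]; simpl.
  - cring.
  - destruct p as [|c' p'].
    + simpl. cring.
    + remember (c' :: p') as pp. simpl. rewrite IH.
      destruct (peval (fst (synth_div t pp)) z) as [q1 q2].
      destruct (snd (synth_div t pp)) as [r1 r2]. destruct z, t, c. cring.
Qed.

Lemma synth_div_len t p : length (fst (synth_div t p)) = pred (length p).
Proof.
  induction p as [|c p IH]; simpl; auto.
  destruct p as [|c' p']; simpl; auto.
Qed.

Lemma synth_div_rem t p : snd (synth_div t p) = peval p t.
Proof. rewrite (synth_div_spec t p t). destruct (peval (fst (synth_div t p)) t). cring. Qed.

Lemma synth_div_cons t c p : p <> nil -> synth_div t (c :: p) =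
  (snd (synth_div t p) :: fst (synth_div t p), Cadd c (Cmul t (snd (synth_div t p)))).
Proof. destruct p; [congruence|]. intros; reflexivity. Qed.

Lemma synth_div_cons2 t c x xs : synth_div t (c :: x :: xs) =
  (snd (synth_div t (x :: xs)) :: fst (synth_div t (x :: xs)), Cadd c (Cmul t (snd (synth_div t (x :: xs))))).
Proof. reflexivity. Qed.

(** [taylor t k p] lists the first [k] Taylor coefficients of [p] at [t], and
    [taylor_quot t k p] the quotient of [p] by [(X - t)^k]. *)
Fixpoint taylor (t : C) (k : nat) (p : list C) : list C :=
  match k with 0 => nil | S k' => snd (synth_div t p) :: taylor t k' (fst (synth_div t p)) end.

Fixpoint taylor_quot (t : C) (k : nat) (p : list C) : list C :=
  match k with 0 => p | S k' => taylor_quot t k' (fst (synth_div t p)) end.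

Lemma taylor_len t k p : length (taylor t k p) = k.
Proof. revert p; induction k; simpl; auto. Qed.

Lemma taylor_quot_len t k p : (length (taylor_quot t k p) = length p - k)%nat.
Proof. revert p; induction k; intros p; simpl. lia. rewrite IHk, synth_div_len. lia. Qed.

Lemma taylor_spec t k p z :
  peval p z = Cadd (peval (taylor t k p) (Csub z t))
                   (Cmul (Cpow (Csub z t) k) (peval (taylor_quot t k p) z)).
Proof.
  revert p; induction k; intros p; simpl.
  - destruct (peval p z); cring.
  - rewrite (synth_div_spec t p z) at 1. rewrite (IHk (fst (synth_div t p))).
    destruct (peval (taylor t k (fst (synth_div t p))) (Csub z t)).
    destruct (peval (taylor_quot t k (fst (synth_div t p))) z).
    destruct (Cpow (Csub z t) k). destruct (snd (synth_div t p)). destruct z, t. cring.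
Qed.

Definition all_zero (l : list C) : Prop := Forall (fun c => c = C0) l.

Lemma peval_all_zero l z : all_zero l -> peval l z = C0.
Proof. induction 1; simpl; auto. rewrite IHForall, H. cring. Qed.

Lemma peval_bound p z0 : exists B, 0 <= B /\ forall h, Rabs h <= 1 ->
  cnorm (peval p (Cadd z0 (RtoC h))) <= B.
Proof.
  induction p as [|c p IH]; simpl.
  - exists 0; split; [lra|]. intros; rewrite cnorm_C0; lra.
  - destruct IH as [B [HB IH]]. exists (cnorm c + (cnorm z0 + 1) * B). split.
    + pose proof (cnorm_nonneg c); pose proof (cnorm_nonneg z0); nra.
    + intros h Hh. eapply Rle_trans; [apply cnorm_add|].
      eapply Rle_trans; [apply Rplus_le_compat_l; apply cnorm_mul|].
      pose proof (cnorm_add z0 (RtoC h)) as Hz. rewrite cnorm_RtoC in Hz.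
      specialize (IH h Hh). pose proof (cnorm_nonneg (peval p (Cadd z0 (RtoC h)))).
      pose proof (cnorm_nonneg (Cadd z0 (RtoC h))).
      apply Rplus_le_compat_l. apply Rmult_le_compat; lra.
Qed.

Lemma C0_of_small c A : (forall h, 0 < Rabs h <= 1 -> cnorm c <= Rabs h * A) -> c = C0.
Proof.
  intros Hc. destruct (Req_dec (cnorm c) 0) as [E|E]; [apply cnorm_eq_0; auto|].
  pose proof (cnorm_nonneg c).
  assert (HA : 0 <= A) by (specialize (Hc 1); rewrite Rabs_R1 in Hc; lra).
  set (h := Rmin (1/2) (cnorm c / (2 * (A + 1)))).
  assert (Hh : 0 < h) by (apply Rmin_glb_lt; [lra|apply Rdiv_lt_0_compat; lra]).
  assert (Hh1 : h <= 1/2) by apply Rmin_l.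
  assert (Hh2 : h * (2 * (A + 1)) <= cnorm c).
  { assert (h <= cnorm c / (2 * (A + 1))) by apply Rmin_r.
    apply (Rmult_le_reg_r (/ (2 * (A + 1)))); [apply Rinv_0_lt_compat; lra|].
    rewrite Rmult_assoc, Rinv_r by lra. lra. }
  specialize (Hc h). rewrite Rabs_pos_eq in Hc by lra. specialize (Hc ltac:(lra)). nra.
Qed.

(* By induction: the constant term is O(|h|), hence zero. *)
Lemma all_zero_of_small r A :
  (forall h, 0 < Rabs h <= 1 -> cnorm (peval r (RtoC h)) <= A * Rabs h ^ length r) ->
  all_zero r.
Proof.
  revert A; induction r as [|c r IH]; intros A H; [constructor|].
  destruct (peval_bound r C0) as [B [HB Hb]].
  assert (Hc : c = C0).
  { apply (C0_of_small c (Rabs A + B)). intros h Hh. specialize (H h Hh). simpl in H.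
    specialize (Hb h (proj2 Hh)).
    replace (Cadd C0 (RtoC h)) with (RtoC h) in Hb by cring.
    assert (E : c = Csub (Cadd c (Cmul (RtoC h) (peval r (RtoC h))))
                         (Cmul (RtoC h) (peval r (RtoC h)))) by cring.
    rewrite E. eapply Rle_trans; [apply cnorm_sub|]. rewrite cnorm_RtoC_mul.
    assert (Hp : 0 <= Rabs h ^ length r <= 1).
    { split; [apply pow_le, Rabs_pos|].
      rewrite <- (pow1 (length r)). apply pow_incr. split; [apply Rabs_pos|lra]. }
    assert (A * (Rabs h * Rabs h ^ length r) <= Rabs A * Rabs h).
    { eapply Rle_trans; [apply Rle_abs|].
      rewrite !Rabs_mult, Rabs_Rabsolu, (Rabs_pos_eq (Rabs h ^ length r)) by lra.
      rewrite <- Rmult_assoc.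
      assert (0 <= Rabs A * Rabs h) by (apply Rmult_le_pos; apply Rabs_pos).
      set (X := Rabs A * Rabs h) in *. nra. }
    assert (Rabs h * cnorm (peval r (RtoC h)) <= Rabs h * B) by (apply Rmult_le_compat_l; [apply Rabs_pos|lra]).
    lra. }
  subst c. constructor; auto.
  apply (IH A). intros h Hh. specialize (H h Hh). simpl in H.
  replace (Cadd C0 (Cmul (RtoC h) (peval r (RtoC h)))) with (Cmul (RtoC h) (peval r (RtoC h))) in H by cring.
  rewrite cnorm_RtoC_mul in H.
  apply (Rmult_le_reg_l (Rabs h)); [lra|]. lra.
Qed.

Fixpoint ladd (a b : list C) : list C :=
  match a, b with x :: a', y :: b' => Cadd x y :: ladd a' b' | _, _ => nil end.

Fixpoint lsub (a b : list C) : list C :=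
  match a, b with x :: a', y :: b' => Csub x y :: lsub a' b' | _, _ => nil end.

Lemma peval_lsub a b z : length a = length b -> peval (lsub a b) z = Csub (peval a z) (peval b z).
Proof.
  revert b; induction a as [|x a IH]; intros [|y b] Hl; simpl in *; try lia.
  - cring.
  - rewrite IH by lia. destruct (peval a z), (peval b z), x, y, z. cring.
Qed.

Lemma peval_inj a b : length a = length b ->
  (forall x : R, peval a (RtoC x) = peval b (RtoC x)) -> a = b.
Proof.
  intros Hl H.
  assert (Hz : all_zero (lsub a b)).
  { apply (all_zero_of_small _ 0). intros h _. rewrite peval_lsub by auto. rewrite H.
    replace (Csub (peval b (RtoC h)) (peval b (RtoC h))) with C0 by (destruct (peval b (RtoC h)); cring).
    rewrite cnorm_C0, Rmult_0_l. lra. }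
  clear H. revert b Hl Hz; induction a as [|x a IH]; intros [|y b] Hl Hz; simpl in *; try lia; auto.
  inversion Hz as [|? ? Hxy Hr]; subst. f_equal.
  - destruct x, y; unfold Csub, C0 in Hxy; simpl in Hxy. injection Hxy; intros. f_equal; lra.
  - apply IH; auto.
Qed.

Lemma taylor_quot_full t k p : (length p <= k)%nat -> taylor_quot t k p = nil.
Proof. intros H. pose proof (taylor_quot_len t k p). destruct (taylor_quot t k p); simpl in *; auto. lia. Qed.

Lemma taylor_full t k p z : (length p <= k)%nat ->
  peval p z = peval (taylor t k p) (Csub z t).
Proof.
  intros H. rewrite (taylor_spec t k p z), taylor_quot_full by auto. simpl.
  destruct (peval (taylor t k p) (Csub z t)), (Cpow (Csub z t) k). cring.
Qed.

Lemma taylor_shift_inv t n h : length h = n -> taylor (Copp t) n (taylor t n h) = h.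
Proof.
  intros Hl. symmetry. apply peval_inj.
  - rewrite !taylor_len; auto.
  - intros x. rewrite (taylor_full t n h) by lia.
    rewrite (taylor_full (Copp t) n (taylor t n h)) by (rewrite taylor_len; lia).
    f_equal. destruct t; cring.
Qed.

Lemma synth_div_add t p q : length p = length q ->
  synth_div t (ladd p q) =
  (ladd (fst (synth_div t p)) (fst (synth_div t q)), Cadd (snd (synth_div t p)) (snd (synth_div t q))).
Proof.
  revert q; induction p as [|x p IH]; intros [|y q] Hl; simpl in Hl; try lia.
  - simpl. f_equal. cring.
  - destruct p as [|x' p']; destruct q as [|y' q']; simpl in Hl; try lia.
    + simpl. reflexivity.
    + change (ladd (x :: x' :: p') (y :: y' :: q')) with (Cadd x y :: ladd (x' :: p') (y' :: q')).
      assert (E : ladd (x' :: p') (y' :: q') = Cadd x' y' :: ladd p' q') by reflexivity.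
      rewrite E, synth_div_cons2, <- E, IH by (simpl; lia). rewrite !synth_div_cons2. simpl. f_equal.
      destruct (snd (synth_div t (x' :: p'))), (snd (synth_div t (y' :: q'))), x, y, t. cring.
Qed.

Lemma taylor_add t k p q : length p = length q ->
  taylor t k (ladd p q) = ladd (taylor t k p) (taylor t k q).
Proof.
  revert p q; induction k; intros p q Hl; simpl; auto.
  rewrite synth_div_add by auto. simpl. f_equal. apply IHk. rewrite !synth_div_len; auto.
Qed.

Lemma synth_div_repeat0 t k : synth_div t (repeat C0 (S k)) = (repeat C0 k, C0).
Proof.
  induction k; [reflexivity|].
  change (repeat C0 (S (S k))) with (C0 :: C0 :: repeat C0 k).
  rewrite synth_div_cons2. change (C0 :: repeat C0 k) with (repeat C0 (S k)).
  rewrite IHk. simpl. f_equal. destruct t; cring.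
Qed.

Lemma synth_div_app0 t p k : p <> nil ->
  synth_div t (p ++ repeat C0 k) = (fst (synth_div t p) ++ repeat C0 k, snd (synth_div t p)).
Proof.
  induction p as [|c p IH]; intros Hp; [congruence|].
  destruct p as [|x xs].
  - destruct k as [|k]; [reflexivity|].
    change ((c :: nil) ++ repeat C0 (S k)) with (c :: C0 :: repeat C0 k).
    rewrite synth_div_cons2. change (C0 :: repeat C0 k) with (repeat C0 (S k)).
    rewrite synth_div_repeat0. simpl. f_equal. destruct t, c; cring.
  - change ((c :: x :: xs) ++ repeat C0 k) with (c :: x :: (xs ++ repeat C0 k)).
    rewrite synth_div_cons2. change (x :: xs ++ repeat C0 k) with ((x :: xs) ++ repeat C0 k).
    rewrite IH by congruence. rewrite synth_div_cons2. simpl. reflexivity.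
Qed.

Lemma taylor_app0 t k p j : (k <= length p)%nat -> taylor t k (p ++ repeat C0 j) = taylor t k p.
Proof.
  revert p; induction k; intros p Hk; simpl; auto.
  rewrite synth_div_app0 by (intros ->; simpl in Hk; lia). simpl. f_equal.
  apply IHk. rewrite synth_div_len. lia.
Qed.

Lemma ladd_all_zero a b : length a = length b -> all_zero (ladd a b) -> b = map Copp a.
Proof.
  revert b; induction a as [|x a IH]; intros [|y b] Hl Hz; simpl in *; try lia; auto.
  inversion Hz; subst. f_equal.
  - destruct x, y; unfold Cadd, C0, Copp in *; simpl in *. injection H1; intros. f_equal; lra.
  - apply IH; auto.
Qed.

Lemma synth_div_last t p a : p <> nil ->
  exists q, fst (synth_div t (p ++ a :: nil)) = q ++ a :: nil /\ length q = pred (length p).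
Proof.
  induction p as [|c p IH]; intros Hp; [congruence|].
  destruct p as [|c' p'].
  - simpl. exists nil. auto.
  - destruct (IH ltac:(congruence)) as [q [Hq Hl]].
    change ((c :: c' :: p') ++ a :: nil) with (c :: c' :: (p' ++ a :: nil)).
    change ((c' :: p') ++ a :: nil) with (c' :: (p' ++ a :: nil)) in Hq.
    rewrite synth_div_cons2. cbn [fst]. rewrite Hq.
    exists (snd (synth_div t (c' :: p' ++ a :: nil)) :: q). simpl. split; auto.
Qed.

Lemma taylor_last t k : forall p a nn, length p = k -> (k < nn)%nat ->
  nth k (taylor t nn (p ++ a :: nil)) C0 = a.
Proof.
  induction k; intros p a nn Hl Hk.
  - destruct p; [|simpl in Hl; lia]. destruct nn; [lia|]. simpl. reflexivity.
  - destruct nn; [lia|]. simpl.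
    destruct (synth_div_last t p a) as [q [Hq Hlq]]. { intros ->; simpl in Hl; lia. }
    rewrite Hq. apply IHk; lia.
Qed.

(** * Common roots of multiplicity n *)

Definition fcoefs (K : Kfield) (d : nat) (y : nat -> R) (j : nat) : list C :=
  map (coef K d y j) (seq 0 d) ++ (C1 :: nil).

Definition common_root (K : Kfield) (d m n : nat) (y : nat -> R) (t : R) : Prop :=
  forall j, (j < m)%nat -> all_zero (taylor (RtoC t) n (fcoefs K d y j)).

Lemma peval_app1 l z : peval (l ++ C1 :: nil) z = Cadd (peval l z) (Cpow z (length l)).
Proof.
  induction l as [|c l IH]; simpl.
  - cring.
  - rewrite IH. destruct (peval l z), (Cpow z (length l)), z, c. cring.
Qed.

Lemma fpoly_fcoefs K d y j z : fpoly K d y j z = peval (fcoefs K d y j) z.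
Proof.
  unfold fpoly, fcoefs. rewrite peval_app1, length_map, length_seq.
  destruct (Cpow z d), (peval (map (coef K d y j) (seq 0 d)) z). cring.
Qed.

Lemma inK_synth_div K t p : inK K t -> Forall (inK K) p ->
  Forall (inK K) (fst (synth_div t p)) /\ inK K (snd (synth_div t p)).
Proof.
  intros Ht Hp. induction Hp as [|c p Hc Hp IH]; simpl.
  - split; [constructor|]. destruct K; simpl; auto.
  - destruct p as [|c' p'].
    + simpl. split; auto.
    + remember (c' :: p') as pp. simpl. destruct IH as [IH1 IH2]. split.
      * constructor; auto.
      * destruct K; simpl in *; auto. unfold Cadd, Cmul; simpl. rewrite Hc, Ht, IH2. ring.
Qed.

Lemma inK_taylor_quot K t k p : inK K t -> Forall (inK K) p -> Forall (inK K) (taylor_quot t k p).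
Proof.
  revert p; induction k; intros p Ht Hp; simpl; auto.
  apply IHk; auto. apply inK_synth_div; auto.
Qed.

Lemma inK_fcoefs K d y j : Forall (inK K) (fcoefs K d y j).
Proof.
  unfold fcoefs. apply Forall_app; split.
  - apply Forall_forall. intros c Hc. apply in_map_iff in Hc. destruct Hc as [i [<- _]].
    destruct K; simpl; auto.
  - constructor; [|constructor]. destruct K; simpl; auto.
Qed.

Lemma root_mult_of_common_root K d m n y t : common_root K d m n y t ->
  forall j, (j < m)%nat -> root_mult_ge K (fpoly K d y j) (RtoC t) n.
Proof.
  intros HZ j Hj. exists (taylor_quot (RtoC t) n (fcoefs K d y j)). split.
  - apply inK_taylor_quot; [destruct K; simpl; auto|apply inK_fcoefs].
  - intros z. rewrite fpoly_fcoefs, (taylor_spec (RtoC t) n).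
    rewrite peval_all_zero by (apply HZ; auto).
    destruct (Cmul (Cpow (Csub z (RtoC t)) n) (peval (taylor_quot (RtoC t) n (fcoefs K d y j)) z)). cring.
Qed.

Lemma taylor_zero_of_root_mult K d n y t j : root_mult_ge K (fpoly K d y j) (RtoC t) n ->
  all_zero (taylor (RtoC t) n (fcoefs K d y j)).
Proof.
  intros [b [_ Hb]].
  set (p := fcoefs K d y j). set (tt := RtoC t).
  destruct (peval_bound b tt) as [B1 [HB1 Hb1]].
  destruct (peval_bound (taylor_quot tt n p) tt) as [B2 [HB2 Hb2]].
  apply (all_zero_of_small _ (B1 + B2)). rewrite taylor_len.
  intros h Hh. set (z := Cadd tt (RtoC h)).
  assert (Ez : Csub z tt = RtoC h) by (unfold z, tt; cring).
  pose proof (taylor_spec tt n p z) as Hs. rewrite Ez in Hs.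
  specialize (Hb z). rewrite fpoly_fcoefs in Hb. fold p in Hb. fold tt in Hb. rewrite Ez in Hb.
  assert (E : peval (taylor tt n p) (RtoC h) =
     Cmul (Cpow (RtoC h) n) (Csub (peval b z) (peval (taylor_quot tt n p) z))).
  { rewrite Hb in Hs. destruct (peval (taylor tt n p) (RtoC h)), (Cpow (RtoC h) n),
      (peval b z), (peval (taylor_quot tt n p) z). unfold Cadd, Cmul, Csub in *. simpl in *.
      injection Hs; intros. apply Cext; simpl; lra. }
  rewrite E. eapply Rle_trans; [apply cnorm_mul|]. rewrite cnorm_pow_RtoC.
  pose proof (cnorm_sub (peval b z) (peval (taylor_quot tt n p) z)).
  specialize (Hb1 h (proj2 Hh)). specialize (Hb2 h (proj2 Hh)). fold z in Hb1, Hb2.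
  pose proof (pow_le (Rabs h) n (Rabs_pos h)).
  rewrite (Rmult_comm (B1 + B2)). apply Rmult_le_compat_l; auto. lra.
Qed.

Lemma Qspace_iff K d m n y : Qspace K d m n y <-> forall t, ~ common_root K d m n y t.
Proof.
  unfold Qspace. split.
  - intros HQ t HZ. apply HQ. exists t. apply root_mult_of_common_root; auto.
  - intros H [t Ht]. apply (H t). intros j Hj. apply (taylor_zero_of_root_mult K d n y t j). apply Ht; auto.
Qed.

Lemma nth_map_seq (f : nat -> C) k d dflt : (k < d)%nat -> nth k (map f (seq 0 d)) dflt = f k.
Proof. intros H. rewrite (nth_indep _ dflt (f 0%nat)) by (rewrite length_map, length_seq; auto).
  rewrite map_nth, seq_nth; auto. Qed.

Lemma length_fcoefs K d y j : length (fcoefs K d y j) = S d.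
Proof. unfold fcoefs. rewrite length_app, length_map, length_seq. simpl. lia. Qed.

Lemma nth_fcoefs K d y j k : nth k (fcoefs K d y j) C0 =
  if Nat.ltb k d then coef K d y j k else if Nat.eqb k d then C1 else C0.
Proof.
  unfold fcoefs. destruct (Nat.ltb_spec k d).
  - rewrite app_nth1 by (rewrite length_map, length_seq; auto). apply nth_map_seq; auto.
  - rewrite app_nth2 by (rewrite length_map, length_seq; auto). rewrite length_map, length_seq.
    destruct (Nat.eqb_spec k d).
    + subst. rewrite Nat.sub_diag. reflexivity.
    + destruct (k - d)%nat as [|[|r]] eqn:E; [lia|reflexivity|reflexivity].
Qed.

Lemma fcoefs_ext K d m y y' j : (j < m)%nat -> (forall i, (i < dK K * d * m)%nat -> y i = y' i) ->
  fcoefs K d y j = fcoefs K d y' j.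
Proof.
  intros Hj H. unfold fcoefs. f_equal. apply map_ext_in. intros i Hi. apply in_seq in Hi.
  destruct K; unfold coef; simpl in *; f_equal; apply H; nia.
Qed.

Lemma common_root_ext K d m n y y' t : (forall i, (i < dK K * d * m)%nat -> y i = y' i) ->
  common_root K d m n y t -> common_root K d m n y' t.
Proof. intros H HZ j Hj. rewrite <- (fcoefs_ext K d m y y' j); auto. Qed.

Fixpoint rpeval (l : list R) (t : R) : R :=
  match l with nil => 0 | c :: l' => c + t * rpeval l' t end.

Lemma fst_peval l t : fst (peval l (RtoC t)) = rpeval (map fst l) t.
Proof. induction l; simpl; auto. rewrite <- IHl. unfold RtoC; simpl. ring. Qed.

Lemma monic_bound l Rb t : (forall c, In c l -> Rabs c <= Rb) -> Rb + 1 <= Rabs t ->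
  1 <= Rabs (rpeval (l ++ 1 :: nil) t).
Proof.
  induction l as [|c l IH]; intros Hl Ht; simpl.
  - rewrite Rmult_0_r, Rplus_0_r, Rabs_R1. lra.
  - assert (H1 : 1 <= Rabs (rpeval (l ++ 1 :: nil) t)) by (apply IH; auto; intros; apply Hl; simpl; auto).
    assert (Hc : Rabs c <= Rb) by (apply Hl; simpl; auto).
    pose proof (Rabs_triang_inv (t * rpeval (l ++ 1 :: nil) t) (-c)).
    replace (t * rpeval (l ++ 1 :: nil) t - - c) with (c + t * rpeval (l ++ 1 :: nil) t) in H by ring.
    rewrite Rabs_Ropp, Rabs_mult in H.
    pose proof (Rabs_pos t). nra.
Qed.

Lemma taylor_head t n p : (1 <= n)%nat -> exists rest, taylor t n p = peval p t :: rest.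
Proof. intros Hn. destruct n; [lia|]. simpl. rewrite synth_div_rem. eauto. Qed.

Lemma no_common_root_far K d m n y t Rb : (1 <= m)%nat -> (1 <= n)%nat ->
  (forall i, (i < dK K * d * m)%nat -> Rabs (y i) <= Rb) -> Rb + 1 <= Rabs t -> ~ common_root K d m n y t.
Proof.
  intros Hm Hn Hy Ht HZ. specialize (HZ 0%nat Hm).
  destruct (taylor_head (RtoC t) n (fcoefs K d y 0) Hn) as [rest Hr]. rewrite Hr in HZ.
  inversion HZ as [|? ? H0 _]; subst.
  assert (H1 : fst (peval (fcoefs K d y 0) (RtoC t)) = 0) by (rewrite H0; reflexivity).
  rewrite fst_peval in H1. unfold fcoefs in H1. rewrite map_app in H1. simpl in H1.
  assert (1 <= Rabs (rpeval (map fst (map (coef K d y 0) (seq 0 d)) ++ 1 :: nil) t)).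
  { apply (monic_bound _ Rb); auto. intros c Hc. rewrite map_map in Hc. apply in_map_iff in Hc.
    destruct Hc as [i [<- Hi]]. apply in_seq in Hi.
    destruct K; simpl; apply Hy; simpl in *; nia. }
  simpl in H. rewrite map_map in H. rewrite map_map in H1. rewrite H1, Rabs_R0 in H. lra.
Qed.

Lemma no_common_root_of_lt K d m n y t : (1 <= m)%nat -> (d < n)%nat -> ~ common_root K d m n y t.
Proof.
  intros Hm Hdn HZ. specialize (HZ 0%nat Hm). unfold fcoefs in HZ.
  assert (E : nth d (taylor (RtoC t) n (map (coef K d y 0) (seq 0 d) ++ C1 :: nil)) C0 = C1).
  { apply taylor_last; auto. rewrite length_map, length_seq; auto. }
  assert (In C1 (taylor (RtoC t) n (map (coef K d y 0) (seq 0 d) ++ C1 :: nil))).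
  { rewrite <- E at 1. apply nth_In. rewrite taylor_len. auto. }
  unfold all_zero in HZ; rewrite Forall_forall in HZ. specialize (HZ _ H). unfold C1, C0 in HZ. injection HZ. lra.
Qed.

Definition bounded (N : nat) (R0 : R) (y : nat -> R) : Prop := forall i, (i < N)%nat -> Rabs (y i) <= R0.

Lemma Qspace_of_bounded K d m n R1 y : (1 <= m)%nat -> (1 <= n)%nat -> bounded (dK K * d * m) R1 y ->
  (forall t, Rabs t <= R1 + 1 -> ~ common_root K d m n y t) -> Qspace K d m n y.
Proof.
  intros Hm Hn Hb H. apply Qspace_iff. intros t. destruct (Rle_dec (Rabs t) (R1 + 1)) as [Ht|Ht]; auto.
  apply (no_common_root_far K d m n y t R1); auto. lra.
Qed.

Lemma no_common_root_of_Qspace K d m n y t : Qspace K d m n y -> ~ common_root K d m n y t.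
Proof. intros HQ. exact (proj1 (Qspace_iff K d m n y) HQ t). Qed.

(** * Elementary real analysis *)

Fixpoint rsum (k : nat) (f : nat -> R) : R :=
  match k with 0 => 0 | S k' => rsum k' f + f k' end.

Lemma rsum_ext k f g : (forall e, (e < k)%nat -> f e = g e) -> rsum k f = rsum k g.
Proof. induction k; intros H; simpl; auto. rewrite IHk, H; auto. Qed.

Lemma rsum_zero k f : (forall e, (e < k)%nat -> f e = 0) -> rsum k f = 0.
Proof. induction k; intros H; simpl; auto. rewrite IHk, H; auto; lra. Qed.

Lemma rsum_single k f e : (e < k)%nat -> (forall e', (e' < k)%nat -> e' <> e -> f e' = 0) -> rsum k f = f e.
Proof.
  induction k; intros He H; simpl; [lia|].
  destruct (Nat.eq_dec e k) as [->|Hne].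
  - rewrite rsum_zero; [lra|]. intros; apply H; lia.
  - rewrite IHk by (auto; lia). rewrite (H k) by lia. lra.
Qed.

Lemma rsum_nonneg k f : (forall e, (e < k)%nat -> 0 <= f e) -> 0 <= rsum k f.
Proof. induction k; simpl; intros H; [lra|]. pose proof (H k ltac:(lia)). pose proof (IHk ltac:(auto)). lra. Qed.

Lemma rsum_nonneg_eq_0 k f : (forall e, (e < k)%nat -> 0 <= f e) -> rsum k f = 0 ->
  forall e, (e < k)%nat -> f e = 0.
Proof.
  induction k; intros H E e He; [lia|]. simpl in E.
  assert (Hk : forall e, (e < k)%nat -> 0 <= f e) by (intros; apply H; lia).
  pose proof (rsum_nonneg k f Hk). pose proof (H k ltac:(lia)).
  destruct (Nat.eq_dec e k) as [->|Hne]; [lra|]. apply IHk; auto; [lra|lia].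
Qed.

Lemma rsum_abs k f c : (forall e, (e < k)%nat -> Rabs (f e) <= c) -> Rabs (rsum k f) <= INR k * c.
Proof.
  induction k; intros H; cbn [rsum]. simpl. rewrite Rabs_R0; lra.
  eapply Rle_trans; [apply Rabs_triang|]. rewrite S_INR.
  pose proof (IHk ltac:(intros; apply H; lia)). pose proof (H k ltac:(lia)). lra.
Qed.

Lemma rsum_two n f k : (S k < n)%nat -> (forall l, (l < n)%nat -> l <> k -> l <> S k -> f l = 0) ->
  rsum n f = f k + f (S k).
Proof.
  induction n; intros Hk H; [lia|]. simpl.
  destruct (Nat.eq_dec n (S k)) as [->|Hne].
  - rewrite (rsum_single (S k) f k) by (auto; intros; apply H; lia). lra.
  - rewrite IHn by (auto; lia). rewrite (H n) by lia. lra.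
Qed.

Lemma mul_add_inj a b c e D : (b < D)%nat -> (e < D)%nat -> (a * D + b = c * D + e)%nat -> a = c /\ b = e.
Proof. intros Hb He H. assert (a = c) by nia. subst. lia. Qed.

Lemma fin_max (n : nat) (P : nat -> R -> Prop) :
  (forall i a b, P i a -> a <= b -> P i b) -> (forall i, (i < n)%nat -> exists a, P i a) ->
  exists a, forall i, (i < n)%nat -> P i a.
Proof.
  intros Hm. induction n; intros H.
  - exists 0; intros; lia.
  - destruct IHn as [a Ha]; [intros; apply H; lia|]. destruct (H n ltac:(lia)) as [b Hb].
    exists (Rmax a b). intros i Hi. destruct (Nat.eq_dec i n) as [->|Hne].
    + apply (Hm _ b); auto. apply Rmax_r.
    + apply (Hm _ a); [apply Ha; lia|apply Rmax_l].
Qed.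

Lemma fin_min (n : nat) (P : nat -> R -> Prop) :
  (forall i a b, P i a -> 0 < b <= a -> P i b) -> (forall i, (i < n)%nat -> exists a, 0 < a /\ P i a) ->
  exists a, 0 < a /\ forall i, (i < n)%nat -> P i a.
Proof.
  intros Hm. induction n; intros H.
  - exists 1; split; [lra|]; intros; lia.
  - destruct IHn as [a [Ha0 Ha]]; [intros; apply H; lia|]. destruct (H n ltac:(lia)) as [b [Hb0 Hb]].
    exists (Rmin a b). split; [apply Rmin_glb_lt; auto|]. intros i Hi. destruct (Nat.eq_dec i n) as [->|Hne].
    + apply (Hm _ b); auto. split; [apply Rmin_glb_lt; auto|apply Rmin_r].
    + apply (Hm _ a); [apply Ha; lia|]. split; [apply Rmin_glb_lt; auto|apply Rmin_l].
Qed.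

Lemma Rabs_le_inv a b : Rabs a <= b -> - b <= a <= b.
Proof. intros H. pose proof (Rle_abs a); pose proof (Rle_abs (-a)); rewrite Rabs_Ropp in *; lra. Qed.

Lemma lip_small Lp eps : 0 <= Lp -> 0 < eps -> Lp * (eps / (Lp + 1)) < eps.
Proof.
  intros H1 H2. apply (Rmult_lt_reg_r (Lp + 1)); [lra|].
  replace (Lp * (eps / (Lp + 1)) * (Lp + 1)) with (Lp * eps) by (field; lra). nra.
Qed.

Lemma small_weight r A : 0 < r -> 0 <= A -> exists beta, (0 < beta <= 1/2) /\ A * beta < r.
Proof.
  intros Hr HA. exists (Rmin (1/2) (r / (2 * (A + 1)))).
  assert (Hq : 0 < r / (2 * (A + 1))) by (apply Rdiv_lt_0_compat; lra).
  split; [split; [apply Rmin_glb_lt; lra|apply Rmin_l]|].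
  apply (Rle_lt_trans _ (A * (r / (2 * (A + 1))))); [apply Rmult_le_compat_l; auto; apply Rmin_r|].
  apply (Rmult_lt_reg_r (2 * (A + 1))); [lra|]. unfold Rdiv.
  rewrite Rmult_assoc, (Rmult_assoc r), Rinv_l by lra. nra.
Qed.

Lemma cont_pt_eps (f : R -> R) x0 :
  (forall eps, 0 < eps -> exists delta, 0 < delta /\ forall x, Rabs (x - x0) < delta -> Rabs (f x - f x0) < eps) ->
  continuity_pt f x0.
Proof.
  intros H eps Heps. destruct (H eps Heps) as [delta [Hd H']]. exists delta. split; auto.
  intros x [_ Hx]. simpl in *. unfold R_dist in *. auto.
Qed.

Definition clamp (a b x : R) : R := Rmax a (Rmin b x).

Lemma clamp_in a b x : a <= b -> a <= clamp a b x <= b.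
Proof. intros H. unfold clamp. split; [apply Rmax_l|]. apply Rmax_lub; auto. apply Rmin_l. Qed.

Lemma clamp_id a b x : a <= x <= b -> clamp a b x = x.
Proof. intros H. unfold clamp. rewrite Rmin_right by lra. rewrite Rmax_right; lra. Qed.

Lemma clamp_lip a b x y : a <= b -> Rabs (clamp a b x - clamp a b y) <= Rabs (x - y).
Proof.
  intros H. unfold clamp, Rmin, Rmax.
  repeat (destruct (Rle_dec _ _)); apply Rabs_le; split;
  try (pose proof (Rle_abs (x - y)); pose proof (Rle_abs (- (x - y))); rewrite Rabs_Ropp in *; lra).
Qed.

Lemma floor_cell n y : (1 <= n)%nat -> 0 <= y <= INR n -> exists k, (k < n)%nat /\ INR k <= y <= INR k + 1.
Proof.
  induction n; intros Hn Hy; [lia|].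
  destruct (Nat.eq_dec n 0) as [->|Hne].
  - exists 0%nat. simpl in *. split; [lia|lra].
  - destruct (Rle_dec y (INR n)) as [Hle|Hgt].
    + destruct (IHn ltac:(lia) ltac:(lra)) as [k [Hk1 Hk2]]. exists k; split; auto; lia.
    + exists n. rewrite S_INR in Hy. split; [lia|lra].
Qed.

Lemma INR_eq_of_close a b : Rabs (INR a - INR b) < 1 -> a = b.
Proof.
  intros H. destruct (Nat.lt_trichotomy a b) as [Hab|[->|Hab]]; auto; exfalso.
  - assert (INR (S a) <= INR b) by (apply le_INR; lia). rewrite S_INR in H0.
    rewrite Rabs_left1 in H by lra. lra.
  - assert (INR (S b) <= INR a) by (apply le_INR; lia). rewrite S_INR in H0.
    rewrite Rabs_pos_eq in H by lra. lra.
Qed.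

Lemma nat_eq_of_close_scaled s a b : 0 < s -> Rabs (s * INR a - s * INR b) < s -> a = b.
Proof.
  intros Hs H. apply INR_eq_of_close.
  rewrite <- Rmult_minus_distr_l, Rabs_mult, Rabs_pos_eq in H by lra.
  apply (Rmult_lt_reg_l s); lra.
Qed.

Lemma nat_above x : exists n : nat, x < INR n.
Proof. destruct (INR_archimed 1 x) as [n Hn]; [lra|]. exists n. lra. Qed.

Lemma bounded_mono N R0 R1 y : R0 <= R1 -> bounded N R0 y -> bounded N R1 y.
Proof. intros H Hy i Hi. specialize (Hy i Hi). lra. Qed.

Lemma bounded_pair N (x y : nat -> R) : exists R0, 0 <= R0 /\ bounded N R0 x /\ bounded N R0 y.
Proof.
  destruct (fin_max N (fun i a => Rabs (x i) <= a /\ Rabs (y i) <= a)) as [R0 H].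
  { intros i a b [] Hab; split; lra. }
  { intros i _. exists (Rmax (Rabs (x i)) (Rabs (y i))). split; [apply Rmax_l|apply Rmax_r]. }
  exists (Rmax 0 R0). split; [apply Rmax_l|]. split; intros i Hi; destruct (H i Hi);
  eapply Rle_trans; eauto; apply Rmax_r.
Qed.

Lemma bounded_triangle N R0 x y z a b : 0 <= a -> 0 <= b -> a + b <= 1 ->
  bounded N R0 x -> bounded N R0 y -> bounded N R0 z ->
  bounded N R0 (fun i => x i + a * (y i - x i) + b * (z i - x i)).
Proof.
  intros Ha Hb Hab Hx Hy Hz i Hi. specialize (Hx i Hi); specialize (Hy i Hi); specialize (Hz i Hi).
  replace (x i + a * (y i - x i) + b * (z i - x i)) with ((1 - a - b) * x i + a * y i + b * z i) by ring.
  pose proof (Rabs_triang ((1 - a - b) * x i + a * y i) (b * z i)).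
  pose proof (Rabs_triang ((1 - a - b) * x i) (a * y i)).
  rewrite !Rabs_mult, (Rabs_pos_eq a), (Rabs_pos_eq b), (Rabs_pos_eq (1 - a - b)) in * by lra.
  assert ((1 - a - b) * Rabs (x i) <= (1 - a - b) * R0) by (apply Rmult_le_compat_l; lra).
  assert (a * Rabs (y i) <= a * R0) by (apply Rmult_le_compat_l; lra).
  assert (b * Rabs (z i) <= b * R0) by (apply Rmult_le_compat_l; lra).
  lra.
Qed.

Lemma bounded_segment N R0 x y a : 0 <= a <= 1 -> bounded N R0 x -> bounded N R0 y ->
  bounded N R0 (fun i => x i + a * (y i - x i)).
Proof.
  intros Ha Hx Hy i Hi. pose proof (bounded_triangle N R0 x y x a 0 ltac:(lra) ltac:(lra) ltac:(lra) Hx Hy Hx i Hi).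
  replace (x i + a * (y i - x i)) with (x i + a * (y i - x i) + 0 * (x i - x i)) by ring. auto.
Qed.

(** * Perturbing four coefficient slots *)

(* The perturbed slot [e < 4] is the real ([slot_part = 0]) or imaginary part of the
   coefficient of degree [slot_coef < n] of the polynomial [slot_poly]; writing
   [e = dK (n j + i) + p], the hypothesis [4 <= dK m n] makes these four distinct slots. *)
Definition slot_quot K e := (e / dK K)%nat.

Definition slot_poly K n e := (slot_quot K e / n)%nat.

Definition slot_coef K n e := (slot_quot K e mod n)%nat.

Definition slot_part K e := (e mod dK K)%nat.

Definition perturb_index K d n e := (dK K * (slot_poly K n e * d + slot_coef K n e) + slot_part K e)%nat.

Definition perturb K d n (w : nat -> R) (i : nat) : R :=
  rsum 4 (fun e => if Nat.eqb i (perturb_index K d n e) then w e else 0).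

Definition perturb_coef K n (w : nat -> R) (j i : nat) : C :=
  (rsum 4 (fun e => if (Nat.eqb (slot_poly K n e) j && Nat.eqb (slot_coef K n e) i
                        && Nat.eqb (slot_part K e) 0)%bool then w e else 0),
   rsum 4 (fun e => if (Nat.eqb (slot_poly K n e) j && Nat.eqb (slot_coef K n e) i
                        && Nat.eqb (slot_part K e) 1)%bool then w e else 0)).

Lemma dK_pos K : (0 < dK K)%nat.
Proof. destruct K; simpl; lia. Qed.

Lemma slot_coef_lt K n e : (1 <= n)%nat -> (slot_coef K n e < n)%nat.
Proof. intros; unfold slot_coef; apply Nat.mod_upper_bound; lia. Qed.

Lemma slot_part_lt K e : (slot_part K e < dK K)%nat.
Proof. unfold slot_part; apply Nat.mod_upper_bound; pose proof (dK_pos K); lia. Qed.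

Lemma slot_decomp K n e : (1 <= n)%nat -> e = (dK K * (slot_poly K n e * n + slot_coef K n e) + slot_part K e)%nat.
Proof.
  intros Hn. unfold slot_poly, slot_coef, slot_part, slot_quot. pose proof (dK_pos K).
  rewrite (Nat.mul_comm (e / dK K / n) n), <- Nat.div_mod by lia.
  apply Nat.div_mod; lia.
Qed.

Lemma slot_inj K n e e' : (1 <= n)%nat -> slot_poly K n e = slot_poly K n e' ->
  slot_coef K n e = slot_coef K n e' -> slot_part K e = slot_part K e' -> e = e'.
Proof. intros Hn H1 H2 H3. rewrite (slot_decomp K n e), (slot_decomp K n e') by auto. congruence. Qed.

Lemma perturb_coef_high K n w j i : (1 <= n)%nat -> (n <= i)%nat -> perturb_coef K n w j i = C0.
Proof.
  intros Hn Hi. unfold perturb_coef, C0. f_equal; apply rsum_zero; intros e _;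
  pose proof (slot_coef_lt K n e Hn); destruct (Nat.eqb_spec (slot_coef K n e) i); try lia;
  rewrite andb_false_r, andb_false_l; auto.
Qed.

Lemma perturb_index_eqb K d n e j i p : (1 <= n)%nat -> (n <= d)%nat -> (i < d)%nat -> (p < dK K)%nat ->
  Nat.eqb (dK K * (j * d + i) + p) (perturb_index K d n e) =
  (Nat.eqb (slot_poly K n e) j && Nat.eqb (slot_coef K n e) i && Nat.eqb (slot_part K e) p)%bool.
Proof.
  intros Hn Hnd Hi Hp. pose proof (slot_coef_lt K n e Hn). pose proof (slot_part_lt K e). unfold perturb_index.
  destruct (Nat.eqb_spec (dK K * (j * d + i) + p) (dK K * (slot_poly K n e * d + slot_coef K n e) + slot_part K e)) as [E|E].
  - rewrite !(Nat.mul_comm (dK K)) in E. apply mul_add_inj in E; auto. destruct E as [E1 E2].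
    apply mul_add_inj in E1; try lia. destruct E1. subst. rewrite !Nat.eqb_refl. auto.
  - destruct (Nat.eqb_spec (slot_poly K n e) j); destruct (Nat.eqb_spec (slot_coef K n e) i);
    destruct (Nat.eqb_spec (slot_part K e) p); simpl; auto. subst. exfalso; apply E; auto.
Qed.

Lemma coef_perturb K d n y w j i : (1 <= n)%nat -> (n <= d)%nat -> (i < d)%nat ->
  coef K d (fun k => y k + perturb K d n w k) j i = Cadd (coef K d y j i) (perturb_coef K n w j i).
Proof.
  intros Hn Hnd Hi. unfold perturb_coef, perturb.
  destruct K; unfold coef, Cadd; cbn [fst snd].
  - f_equal.
    + f_equal. apply rsum_ext. intros e _.
      replace (j * d + i)%nat with (dK KR * (j * d + i) + 0)%nat by (simpl; lia).
      rewrite perturb_index_eqb by (simpl; lia). auto.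
    + rewrite rsum_zero; [lra|]. intros e _. unfold slot_part; simpl dK. rewrite Nat.mod_1_r. simpl.
      rewrite andb_false_r; auto.
  - f_equal; f_equal; apply rsum_ext; intros e _.
    + replace (2 * (j * d + i))%nat with (dK KC * (j * d + i) + 0)%nat by (simpl; lia).
      rewrite perturb_index_eqb by (simpl; lia). auto.
    + replace (2 * (j * d + i) + 1)%nat with (dK KC * (j * d + i) + 1)%nat by (simpl; lia).
      rewrite perturb_index_eqb by (simpl; lia). auto.
Qed.

Lemma ladd_map_app (f g : nat -> C) s a b :
  ladd (map f s ++ a :: nil) (map g s ++ b :: nil) = map (fun i => Cadd (f i) (g i)) s ++ Cadd a b :: nil.
Proof. induction s; simpl; auto. rewrite IHs; auto. Qed.

Lemma map_seq_repeat0 (f : nat -> C) a k : (forall i, (a <= i)%nat -> f i = C0) -> map f (seq a k) = repeat C0 k.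
Proof. revert a; induction k; intros a H; simpl; auto. rewrite H, IHk; auto; intros; apply H; lia. Qed.

Definition perturb_coefs K n w j : list C := map (perturb_coef K n w j) (seq 0 n).

Lemma fcoefs_perturb K d n y w j : (1 <= n)%nat -> (n <= d)%nat ->
  fcoefs K d (fun k => y k + perturb K d n w k) j = ladd (fcoefs K d y j) (perturb_coefs K n w j ++ repeat C0 (S (d - n))).
Proof.
  intros Hn Hnd. unfold fcoefs.
  assert (E : perturb_coefs K n w j ++ repeat C0 (S (d - n)) = map (perturb_coef K n w j) (seq 0 d) ++ C0 :: nil).
  { unfold perturb_coefs. replace d with (n + (d - n))%nat at 2 by lia. rewrite seq_app, map_app.
    rewrite (map_seq_repeat0 _ (0 + n)) by (intros; apply perturb_coef_high; lia).
    rewrite <- app_assoc. f_equal. rewrite <- repeat_cons; auto. }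
  rewrite E, ladd_map_app. f_equal.
  - apply map_ext_in. intros i Hi. apply in_seq in Hi. apply coef_perturb; lia.
  - f_equal. cring.
Qed.

Definition forced_value K d n (y : nat -> R) (t : R) (e : nat) : R :=
  let c := nth (slot_coef K n e) (taylor (Copp (RtoC t)) n (map Copp (taylor (RtoC t) n (fcoefs K d y (slot_poly K n e))))) C0 in
  if Nat.eqb (slot_part K e) 0 then fst c else snd c.

Lemma slot_poly_lt K m n e : (1 <= n)%nat -> (4 <= dK K * m * n)%nat -> (e < 4)%nat -> (slot_poly K n e < m)%nat.
Proof.
  intros Hn H4 He. pose proof (slot_decomp K n e Hn). pose proof (slot_coef_lt K n e Hn).
  pose proof (dK_pos K). destruct (Nat.lt_ge_cases (slot_poly K n e) m) as [|Hge]; auto.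
  exfalso. assert (m * n <= slot_poly K n e * n)%nat by (apply Nat.mul_le_mono_r; auto).
  assert (dK K * (m * n) <= dK K * (slot_poly K n e * n))%nat by (apply Nat.mul_le_mono_l; auto).
  rewrite Nat.mul_assoc in H3. lia.
Qed.

Lemma perturb_coef_slot K n w e : (1 <= n)%nat -> (e < 4)%nat ->
  (let c := perturb_coef K n w (slot_poly K n e) (slot_coef K n e) in
   if Nat.eqb (slot_part K e) 0 then fst c else snd c) = w e.
Proof.
  intros Hn He. pose proof (slot_part_lt K e) as Hp.
  assert (Hp01 : slot_part K e = 0%nat \/ slot_part K e = 1%nat) by (destruct K; simpl in *; lia).
  assert (Honly : forall q, slot_part K e = q -> forall e', (e' < 4)%nat -> e' <> e ->
    (if (Nat.eqb (slot_poly K n e') (slot_poly K n e) && Nat.eqb (slot_coef K n e') (slot_coef K n e)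
         && Nat.eqb (slot_part K e') q)%bool then w e' else 0) = 0).
  { intros q Hq e' He' Hne. destruct (Nat.eqb_spec (slot_poly K n e') (slot_poly K n e));
      destruct (Nat.eqb_spec (slot_coef K n e') (slot_coef K n e)); destruct (Nat.eqb_spec (slot_part K e') q);
      simpl; auto. exfalso; apply Hne; apply (slot_inj K n); congruence. }
  unfold perturb_coef; cbn zeta; cbn [fst snd].
  destruct Hp01 as [Hq|Hq]; rewrite Hq; simpl Nat.eqb; cbn iota;
    rewrite (rsum_single 4 _ e) by first [exact He | exact (Honly _ Hq)]; rewrite !Nat.eqb_refl, Hq; reflexivity.
Qed.

(* If [t] becomes a common root after adding [perturb w], the Taylor expansion at [t]
   of the slot part of the j-th polynomial is minus that of the unperturbed polynomial;
   expanding back at 0 determines the slots. *)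
Lemma perturb_coefs_forced K d m n y w t j : (1 <= n)%nat -> (n <= d)%nat -> (j < m)%nat ->
  common_root K d m n (fun i => y i + perturb K d n w i) t ->
  perturb_coefs K n w j = taylor (Copp (RtoC t)) n (map Copp (taylor (RtoC t) n (fcoefs K d y j))).
Proof.
  intros Hn Hnd Hj HZ. specialize (HZ j Hj). rewrite fcoefs_perturb in HZ by auto.
  assert (Hlen : length (perturb_coefs K n w j) = n)
    by (unfold perturb_coefs; rewrite length_map, length_seq; auto).
  assert (Hl : length (fcoefs K d y j) = length (perturb_coefs K n w j ++ repeat C0 (S (d - n))))
    by (rewrite length_fcoefs, length_app, Hlen, repeat_length; lia).
  rewrite taylor_add in HZ by auto.
  apply ladd_all_zero in HZ; [|rewrite !taylor_len; auto].
  rewrite taylor_app0 in HZ by lia.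
  rewrite <- HZ, taylor_shift_inv; auto.
Qed.

Lemma perturb_forced K d m n y w t : (1 <= n)%nat -> (n <= d)%nat -> (4 <= dK K * m * n)%nat ->
  common_root K d m n (fun i => y i + perturb K d n w i) t ->
  forall e, (e < 4)%nat -> w e = forced_value K d n y t e.
Proof.
  intros Hn Hnd H4 HZ e He.
  unfold forced_value. rewrite <- (perturb_coefs_forced K d m n y w t) by (auto; apply slot_poly_lt; auto).
  unfold perturb_coefs. rewrite nth_map_seq by (apply slot_coef_lt; auto).
  symmetry. apply perturb_coef_slot; auto.
Qed.

Lemma perturb_scale K d n c w i : perturb K d n (fun e => c * w e) i = c * perturb K d n w i.
Proof. unfold perturb; simpl. repeat match goal with |- context [Nat.eqb ?a ?b] => destruct (Nat.eqb a b) end; ring. Qed.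

Lemma perturb_bound K d n w i eta : (forall e, (e < 4)%nat -> 0 <= w e <= eta) ->
  Rabs (perturb K d n w i) <= 4 * eta.
Proof.
  intros H. unfold perturb. replace 4 with (INR 4) by (simpl; lra). apply rsum_abs.
  intros e He. destruct (Nat.eqb i (perturb_index K d n e)); [rewrite Rabs_pos_eq; apply H; auto|].
  rewrite Rabs_R0. pose proof (H e He); lra.
Qed.

Lemma bounded_perturb K d n N R0 G w eta : (forall e, (e < 4)%nat -> 0 <= w e <= eta) ->
  bounded N R0 G -> bounded N (R0 + 4 * eta) (fun i => G i + perturb K d n w i).
Proof.
  intros Hw HG i Hi. eapply Rle_trans; [apply Rabs_triang|].
  pose proof (HG i Hi). pose proof (perturb_bound K d n w i eta Hw). lra.
Qed.

(** * Bounded Lipschitz functions and the defect *)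

Definition listnorm (l : list C) : R := fold_right (fun c a => cnorm c + a) 0 l.

Lemma listnorm_nonneg l : 0 <= listnorm l.
Proof. induction l; simpl; [lra|]. pose proof (cnorm_nonneg a); lra. Qed.

Lemma listnorm_all_zero l : all_zero l -> listnorm l = 0.
Proof. induction 1; simpl; auto. rewrite IHForall, H, cnorm_C0; ring. Qed.

Lemma all_zero_of_listnorm l : listnorm l = 0 -> all_zero l.
Proof.
  induction l; simpl; intros H; constructor.
  - pose proof (cnorm_nonneg a); pose proof (listnorm_nonneg l). apply cnorm_eq_0; lra.
  - pose proof (cnorm_nonneg a); pose proof (listnorm_nonneg l). apply IHl; lra.
Qed.

Fixpoint dist_sup (D : nat) (p q : nat -> R) : R :=
  match D with 0 => 0 | S D' => Rmax (Rabs (p D' - q D')) (dist_sup D' p q) end.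

Lemma dist_sup_nonneg D p q : 0 <= dist_sup D p q.
Proof. induction D; simpl; [lra|]. eapply Rle_trans; [apply IHD|apply Rmax_r]. Qed.

Lemma dist_sup_ge D p q i : (i < D)%nat -> Rabs (p i - q i) <= dist_sup D p q.
Proof.
  induction D; intros Hi; [lia|]. simpl. destruct (Nat.eq_dec i D) as [->|Hne].
  - apply Rmax_l.
  - eapply Rle_trans; [apply IHD; lia|apply Rmax_r].
Qed.

Lemma dist_sup_le D p q c : 0 <= c -> (forall i, (i < D)%nat -> Rabs (p i - q i) <= c) -> dist_sup D p q <= c.
Proof.
  induction D; intros Hc H; simpl; auto. apply Rmax_lub; auto.
Qed.

Lemma dist_sup_ext D p q p' q' : (forall i, (i < D)%nat -> p i = p' i /\ q i = q' i) ->
  dist_sup D p q = dist_sup D p' q'.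
Proof. induction D; intros H; simpl; auto. destruct (H D ltac:(lia)) as [-> ->]. rewrite IHD; auto. Qed.

Lemma dist_sup_refl D p : dist_sup D p p = 0.
Proof.
  apply Rle_antisym; [|apply dist_sup_nonneg].
  apply dist_sup_le; [lra|]. intros; unfold Rminus; rewrite Rplus_opp_r, Rabs_R0; lra.
Qed.

Lemma dist_sup_sym D p q : dist_sup D p q = dist_sup D q p.
Proof. induction D; simpl; auto. rewrite IHD, <- Rabs_Ropp. do 3 f_equal. ring. Qed.

Lemma dist_sup_add_scaled N u v b B : 0 <= b -> 0 <= B -> (forall i, (i < N)%nat -> Rabs (v i) <= B) ->
  dist_sup N (fun i => u i + b * v i) u <= b * B.
Proof.
  intros Hb HB Hv. apply dist_sup_le; [nra|]. intros i Hi.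
  replace (u i + b * v i - u i) with (b * v i) by ring.
  rewrite Rabs_mult, Rabs_pos_eq by lra. apply Rmult_le_compat_l; auto.
Qed.

Definition BL (D : nat) (S : (nat -> R) -> Prop) (f : (nat -> R) -> R) : Prop :=
  exists M Lc, 0 <= M /\ 0 <= Lc /\ (forall p, S p -> Rabs (f p) <= M) /\
    (forall p q, S p -> S q -> Rabs (f p - f q) <= Lc * dist_sup D p q).

Section BoundedLipschitz.
Variable D : nat.
Variable Sx : (nat -> R) -> Prop.

Lemma BL_ext f g : (forall p, Sx p -> f p = g p) -> BL D Sx f -> BL D Sx g.
Proof.
  intros E [M [Lc [HM [HL [H1 H2]]]]]. exists M, Lc. repeat split; auto.
  - intros p Hp; rewrite <- E; auto.
  - intros p q Hp Hq; rewrite <- !E; auto.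
Qed.

Lemma BL_const c : BL D Sx (fun _ => c).
Proof. exists (Rabs c), 0. repeat split; try lra; auto using Rabs_pos, Rle_refl.
  intros. unfold Rminus; rewrite Rplus_opp_r, Rabs_R0. pose proof (dist_sup_nonneg D p q). nra. Qed.

Lemma BL_proj i B : (i < D)%nat -> (forall p, Sx p -> Rabs (p i) <= B) -> BL D Sx (fun p => p i).
Proof.
  intros Hi HB. exists (Rabs B), 1. repeat split; try lra; auto using Rabs_pos.
  - intros p Hp. eapply Rle_trans; [apply HB; auto|apply Rle_abs].
  - intros p q _ _. rewrite Rmult_1_l. apply dist_sup_ge; auto.
Qed.

Lemma BL_add f g : BL D Sx f -> BL D Sx g -> BL D Sx (fun p => f p + g p).
Proof.
  intros [M1 [L1 [HM1 [HL1 [B1 C1']]]]] [M2 [L2 [HM2 [HL2 [B2 C2']]]]].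
  exists (M1 + M2), (L1 + L2). repeat split; try lra.
  - intros p Hp. eapply Rle_trans; [apply Rabs_triang|]. specialize (B1 p Hp); specialize (B2 p Hp); lra.
  - intros p q Hp Hq. replace (f p + g p - (f q + g q)) with ((f p - f q) + (g p - g q)) by ring.
    eapply Rle_trans; [apply Rabs_triang|]. specialize (C1' p q Hp Hq); specialize (C2' p q Hp Hq). lra.
Qed.

Lemma BL_opp f : BL D Sx f -> BL D Sx (fun p => - f p).
Proof.
  intros [M1 [L1 [HM1 [HL1 [B1 C1']]]]]. exists M1, L1. repeat split; auto.
  - intros p Hp. rewrite Rabs_Ropp; auto.
  - intros p q Hp Hq. replace (- f p - - f q) with (- (f p - f q)) by ring. rewrite Rabs_Ropp; auto.
Qed.

Lemma BL_sub f g : BL D Sx f -> BL D Sx g -> BL D Sx (fun p => f p - g p).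
Proof. intros. apply BL_add; auto. apply BL_opp; auto. Qed.

Lemma BL_mul f g : BL D Sx f -> BL D Sx g -> BL D Sx (fun p => f p * g p).
Proof.
  intros [M1 [L1 [HM1 [HL1 [B1 C1']]]]] [M2 [L2 [HM2 [HL2 [B2 C2']]]]].
  exists (M1 * M2), (M1 * L2 + M2 * L1). repeat split; try nra.
  - intros p Hp. rewrite Rabs_mult. specialize (B1 p Hp); specialize (B2 p Hp).
    apply Rmult_le_compat; auto using Rabs_pos.
  - intros p q Hp Hq. replace (f p * g p - f q * g q) with (f p * (g p - g q) + g q * (f p - f q)) by ring.
    eapply Rle_trans; [apply Rabs_triang|]. rewrite !Rabs_mult.
    specialize (B1 p Hp); specialize (B2 q Hq); specialize (C1' p q Hp Hq); specialize (C2' p q Hp Hq).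
    pose proof (Rabs_pos (f p)); pose proof (Rabs_pos (g q)); pose proof (dist_sup_nonneg D p q).
    pose proof (Rabs_pos (g p - g q)); pose proof (Rabs_pos (f p - f q)).
    assert (Rabs (f p) * Rabs (g p - g q) <= M1 * (L2 * dist_sup D p q)) by (apply Rmult_le_compat; auto).
    assert (Rabs (g q) * Rabs (f p - f q) <= M2 * (L1 * dist_sup D p q)) by (apply Rmult_le_compat; auto).
    nra.
Qed.

Lemma BL_abs f : BL D Sx f -> BL D Sx (fun p => Rabs (f p)).
Proof.
  intros [M1 [L1 [HM1 [HL1 [B1 C1']]]]]. exists M1, L1. repeat split; auto.
  - intros p Hp. rewrite Rabs_Rabsolu; auto.
  - intros p q Hp Hq. eapply Rle_trans; [apply Rabs_triang_inv2|]. auto.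
Qed.

Lemma BL_inv f b : 0 < b -> (forall p, Sx p -> b <= f p) -> BL D Sx f -> BL D Sx (fun p => / f p).
Proof.
  intros Hb Hf [M1 [L1 [HM1 [HL1 [B1 C1']]]]]. exists (/ b), (L1 / (b * b)).
  repeat split.
  - left; apply Rinv_0_lt_compat; auto.
  - apply Rmult_le_pos; auto. left; apply Rinv_0_lt_compat; nra.
  - intros p Hp. specialize (Hf p Hp). rewrite Rabs_pos_eq by (left; apply Rinv_0_lt_compat; lra).
    apply Rinv_le_contravar; lra.
  - intros p q Hp Hq. pose proof (Hf p Hp); pose proof (Hf q Hq).
    replace (/ f p - / f q) with ((f q - f p) / (f p * f q)) by (field; lra).
    unfold Rdiv. rewrite Rabs_mult, Rabs_inv, (Rabs_pos_eq (f p * f q)) by nra.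
    rewrite <- Rabs_Ropp. replace (- (f q - f p)) with (f p - f q) by ring.
    specialize (C1' p q Hp Hq).
    assert (/ (f p * f q) <= / (b * b)) by (apply Rinv_le_contravar; nra).
    pose proof (dist_sup_nonneg D p q). pose proof (Rabs_pos (f p - f q)).
    assert (0 < / (f p * f q)) by (apply Rinv_0_lt_compat; nra).
    apply (Rle_trans _ ((L1 * dist_sup D p q) * / (b * b))).
    + apply Rmult_le_compat; [apply Rabs_pos|lra|exact C1'|assumption].
    + right. unfold Rdiv. ring.
Qed.

Lemma BL_rsum k (f : nat -> (nat -> R) -> R) : (forall j, (j < k)%nat -> BL D Sx (f j)) ->
  BL D Sx (fun p => rsum k (fun j => f j p)).
Proof.
  induction k; intros H; simpl.
  - apply BL_const.
  - apply BL_add; auto.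
Qed.

Definition BLC (f : (nat -> R) -> C) := BL D Sx (fun p => fst (f p)) /\ BL D Sx (fun p => snd (f p)).

Lemma BLC_const c : BLC (fun _ => c).
Proof. split; apply BL_const. Qed.

Lemma BLC_add f g : BLC f -> BLC g -> BLC (fun p => Cadd (f p) (g p)).
Proof. intros [] []; split; unfold Cadd; simpl; apply BL_add; auto. Qed.

Lemma BLC_opp f : BLC f -> BLC (fun p => Copp (f p)).
Proof. intros []; split; unfold Copp; simpl; apply BL_opp; auto. Qed.

Lemma BLC_mul f g : BLC f -> BLC g -> BLC (fun p => Cmul (f p) (g p)).
Proof. intros [] []; split; unfold Cmul; simpl; [apply BL_sub|apply BL_add]; apply BL_mul; auto. Qed.

Lemma BLC_RtoC f : BL D Sx f -> BLC (fun p => RtoC (f p)).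
Proof. intros H; split; unfold RtoC; simpl; auto. apply BL_const. Qed.

Lemma BL_cnorm f : BLC f -> BL D Sx (fun p => cnorm (f p)).
Proof. intros []; unfold cnorm; apply BL_add; apply BL_abs; auto. Qed.

Lemma BLC_ext f g : (forall p, f p = g p) -> BLC f -> BLC g.
Proof.
  intros E [H1 H2]; split; [apply (BL_ext (fun p => fst (f p)))|apply (BL_ext (fun p => snd (f p)))];
    auto; intros; rewrite E; auto.
Qed.

Definition BLL (lf : (nat -> R) -> list C) :=
  exists len, (forall p, length (lf p) = len) /\ forall k, BLC (fun p => nth k (lf p) C0).

Lemma BLL_nth lf k : BLL lf -> BLC (fun p => nth k (lf p) C0).
Proof. intros [len [_ H]]; auto. Qed.

Lemma BLL_ext lf lg : (forall p, lf p = lg p) -> BLL lf -> BLL lg.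
Proof.
  intros E [len [Hl Hk]]. exists len. split; [intros p; rewrite <- E; auto|].
  intros k. apply (BLC_ext (fun p => nth k (lf p) C0)); auto. intros p; rewrite E; auto.
Qed.

Lemma BLL_nil : BLL (fun _ => nil).
Proof. exists 0%nat. split; auto. intros k. apply (BLC_ext (fun _ => C0)); [destruct k; auto|apply BLC_const]. Qed.

Lemma BLL_cons f lf : BLC f -> BLL lf -> BLL (fun p => f p :: lf p).
Proof.
  intros Hf [len [Hl Hk]]. exists (S len). split; [intros p; simpl; rewrite Hl; auto|].
  intros [|k]; simpl; auto.
Qed.

Lemma BLL_tl lf : BLL lf -> BLL (fun p => tl (lf p)).
Proof.
  intros [len [Hl Hk]]. exists (pred len). split; [intros p; rewrite <- (Hl p); destruct (lf p); auto|].
  intros k. apply (BLC_ext (fun p => nth (S k) (lf p) C0)); auto. intros p; destruct (lf p); destruct k; auto.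
Qed.

Lemma BLL_synth_div len : forall lf tf, (forall p, length (lf p) = len) -> BLL lf -> BLC tf ->
  BLL (fun p => fst (synth_div (tf p) (lf p))) /\ BLC (fun p => snd (synth_div (tf p) (lf p))).
Proof.
  induction len as [|len IH]; intros lf tf Hl Hlf Ht.
  - assert (E : forall p, lf p = nil) by (intros p; specialize (Hl p); destruct (lf p); simpl in *; auto; lia).
    split; [apply (BLL_ext (fun _ => nil)); [intros p; rewrite E; auto|apply BLL_nil]|].
    apply (BLC_ext (fun _ => C0)); [intros p; rewrite E; auto|apply BLC_const].
  - assert (E : forall p, lf p = nth 0 (lf p) C0 :: tl (lf p))
      by (intros p; specialize (Hl p); destruct (lf p); simpl in *; auto; lia).
    assert (Hl' : forall p, length (tl (lf p)) = len)
      by (intros p; rewrite <- (Nat.pred_succ len), <- (Hl p); destruct (lf p); auto).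
    pose proof (BLL_nth _ 0 Hlf) as Hhd.
    destruct len as [|len'].
    + assert (E0 : forall p, tl (lf p) = nil) by (intros p; specialize (Hl' p); destruct (tl (lf p)); simpl in *; auto; lia).
      split.
      * apply (BLL_ext (fun _ => nil)); [|apply BLL_nil]. intros p. rewrite E, E0. reflexivity.
      * apply (BLC_ext (fun p => nth 0 (lf p) C0)); auto. intros p. rewrite (E p) at 2. rewrite E0. reflexivity.
    + destruct (IH (fun p => tl (lf p)) tf Hl' (BLL_tl _ Hlf) Ht) as [Hq Hr].
      assert (Ne : forall p, tl (lf p) <> nil) by (intros p; specialize (Hl' p); destruct (tl (lf p)); simpl in *; congruence).
      split.
      * apply (BLL_ext (fun p => snd (synth_div (tf p) (tl (lf p))) :: fst (synth_div (tf p) (tl (lf p))))).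
        -- intros p. rewrite (E p) at 3. rewrite synth_div_cons by auto. reflexivity.
        -- apply BLL_cons; auto.
      * apply (BLC_ext (fun p => Cadd (nth 0 (lf p) C0) (Cmul (tf p) (snd (synth_div (tf p) (tl (lf p))))))).
        -- intros p. rewrite (E p) at 3. rewrite synth_div_cons by auto. reflexivity.
        -- apply BLC_add; auto. apply BLC_mul; auto.
Qed.

Lemma BLL_taylor k : forall lf tf, BLL lf -> BLC tf -> BLL (fun p => taylor (tf p) k (lf p)).
Proof.
  induction k; intros lf tf Hlf Ht; [apply BLL_nil|].
  pose proof Hlf as [len [Hl _]].
  destruct (BLL_synth_div len lf tf Hl Hlf Ht) as [Hq Hr].
  apply BLL_cons; auto.
Qed.

Lemma BLL_map_Copp lf : BLL lf -> BLL (fun p => map Copp (lf p)).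
Proof.
  intros [len [Hl Hk]]. exists len. split; [intros; rewrite length_map; auto|].
  intros k. apply (BLC_ext (fun p => Copp (nth k (lf p) C0))).
  - intros p. generalize (lf p). clear. intros l. revert k; induction l; intros [|k]; simpl; auto;
    unfold Copp, C0; simpl; apply Cext; simpl; ring.
  - apply BLC_opp; auto.
Qed.

Lemma BLL_listnorm lf : BLL lf -> BL D Sx (fun p => listnorm (lf p)).
Proof.
  intros Hlf. pose proof Hlf as [len [Hl _]]. revert lf Hl Hlf. induction len; intros lf Hl Hlf.
  - apply (BL_ext (fun _ => 0)); [|apply BL_const].
    intros p _. specialize (Hl p). destruct (lf p); simpl in *; auto; lia.
  - apply (BL_ext (fun p => cnorm (nth 0 (lf p) C0) + listnorm (tl (lf p)))).
    + intros p _. specialize (Hl p). destruct (lf p); simpl in *; auto; lia.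
    + apply BL_add; [apply BL_cnorm, BLL_nth; auto|]. apply IHlen; [|apply BLL_tl; auto].
      intros p. specialize (Hl p). destruct (lf p); simpl in *; lia.
Qed.

End BoundedLipschitz.

Definition defect K d m n (y : nat -> R) (t : R) : R :=
  rsum m (fun j => listnorm (taylor (RtoC t) n (fcoefs K d y j))).

Section DefectLipschitz.
Variable D : nat.
Variable Sx : (nat -> R) -> Prop.

Lemma BLL_fcoefs K d m (Y : (nat -> R) -> nat -> R) j : (j < m)%nat ->
  (forall i, (i < dK K * d * m)%nat -> BL D Sx (fun p => Y p i)) -> BLL D Sx (fun p => fcoefs K d (Y p) j).
Proof.
  intros Hj HY. exists (S d). split; [intros; apply length_fcoefs|].
  intros k. apply (BLC_ext D Sx (fun p => if Nat.ltb k d then coef K d (Y p) j k else if Nat.eqb k d then C1 else C0)).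
  - intros p. rewrite nth_fcoefs. reflexivity.
  - destruct (Nat.ltb_spec k d).
    + destruct K; split; simpl; try apply BL_const; apply HY; simpl; nia.
    + destruct (Nat.eqb k d); apply BLC_const.
Qed.

Lemma BL_defect K d m n (Y : (nat -> R) -> nat -> R) (Tt : (nat -> R) -> R) :
  (forall i, (i < dK K * d * m)%nat -> BL D Sx (fun p => Y p i)) -> BL D Sx Tt ->
  BL D Sx (fun p => defect K d m n (Y p) (Tt p)).
Proof.
  intros HY HT. unfold defect. apply (BL_rsum D Sx m (fun j p => listnorm (taylor (RtoC (Tt p)) n (fcoefs K d (Y p) j)))).
  intros j Hj. apply BLL_listnorm. apply BLL_taylor; [apply BLL_fcoefs with (m := m); auto|]. apply BLC_RtoC; auto.
Qed.

Lemma BL_forced_value K d m n (Y : (nat -> R) -> nat -> R) (Tt : (nat -> R) -> R) e :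
  (slot_poly K n e < m)%nat ->
  (forall i, (i < dK K * d * m)%nat -> BL D Sx (fun p => Y p i)) -> BL D Sx Tt ->
  BL D Sx (fun p => forced_value K d n (Y p) (Tt p) e).
Proof.
  intros Hj HY HT. unfold forced_value.
  assert (H : BLC D Sx (fun p => nth (slot_coef K n e) (taylor (Copp (RtoC (Tt p))) n
              (map Copp (taylor (RtoC (Tt p)) n (fcoefs K d (Y p) (slot_poly K n e))))) C0)).
  { apply BLL_nth. apply BLL_taylor.
    - apply BLL_map_Copp. apply BLL_taylor; [apply BLL_fcoefs with (m := m); auto|]. apply BLC_RtoC; auto.
    - apply BLC_opp. apply BLC_RtoC; auto. }
  destruct H as [H1 H2]. destruct (Nat.eqb (slot_part K e) 0); auto.
Qed.
End DefectLipschitz.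

Lemma defect_nonneg K d m n y t : 0 <= defect K d m n y t.
Proof. apply rsum_nonneg; intros; apply listnorm_nonneg. Qed.

Lemma defect_pos K d m n y t : ~ common_root K d m n y t -> 0 < defect K d m n y t.
Proof.
  intros HZ. destruct (defect_nonneg K d m n y t) as [|E]; auto. exfalso; apply HZ.
  intros j Hj. apply all_zero_of_listnorm.
  apply (rsum_nonneg_eq_0 m (fun j => listnorm (taylor (RtoC t) n (fcoefs K d y j)))); auto.
  intros; apply listnorm_nonneg.
Qed.

Lemma no_common_root_of_defect K d m n y t : 0 < defect K d m n y t -> ~ common_root K d m n y t.
Proof.
  intros H HZ. unfold defect in H. rewrite rsum_zero in H; [lra|].
  intros j Hj. apply listnorm_all_zero. apply HZ; auto.
Qed.

Lemma defect_ext K d m n y y' t : (forall i, (i < dK K * d * m)%nat -> y i = y' i) ->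
  defect K d m n y t = defect K d m n y' t.
Proof. intros H. unfold defect. apply rsum_ext. intros j Hj. rewrite (fcoefs_ext K d m y y' j); auto. Qed.

(* [t] is appended as coordinate [N], so that [defect] becomes a function of one point. *)
Definition append_coord (N : nat) (y : nat -> R) (t : R) : nat -> R := fun i => if Nat.ltb i N then y i else t.

Lemma defect_lipschitz K d m n R0 T : exists Lp, 0 <= Lp /\ forall y y' t t',
  bounded (dK K * d * m) R0 y -> bounded (dK K * d * m) R0 y' -> Rabs t <= T -> Rabs t' <= T ->
  Rabs (defect K d m n y t - defect K d m n y' t') <= Lp * Rmax (Rabs (t - t')) (dist_sup (dK K * d * m) y y').
Proof.
  set (N := (dK K * d * m)%nat).
  set (Sx := fun p : nat -> R => (forall i, (i < N)%nat -> Rabs (p i) <= R0) /\ Rabs (p N) <= T).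
  assert (Hlow : forall y t i, (i < N)%nat -> append_coord N y t i = y i)
    by (intros y t i Hi; unfold append_coord; apply Nat.ltb_lt in Hi; rewrite Hi; auto).
  assert (Htop : forall y t, append_coord N y t N = t)
    by (intros; unfold append_coord; rewrite Nat.ltb_irrefl; auto).
  assert (Hin : forall y t, bounded N R0 y -> Rabs t <= T -> Sx (append_coord N y t))
    by (intros y t Hy Ht; split; [intros i Hi; rewrite Hlow; auto|rewrite Htop; auto]).
  destruct (BL_defect (S N) Sx K d m n (fun p => p) (fun p => p N)) as [M [Lp [_ [HLp [_ H]]]]].
  - intros i Hi. apply (BL_proj _ _ _ R0); [lia|]. intros p [Hp _]; auto.
  - apply (BL_proj _ _ _ T); [lia|]. intros p [_ Hp]; auto.
  - exists Lp. split; auto. intros y y' t t' Hy Hy' Ht Ht'.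
    specialize (H (append_coord N y t) (append_coord N y' t') (Hin _ _ Hy Ht) (Hin _ _ Hy' Ht')).
    rewrite !Htop, !(defect_ext K d m n (append_coord N _ _) _ _ (Hlow _ _)) in H.
    simpl in H. rewrite !Htop, (dist_sup_ext N _ _ y y') in H; auto.
Qed.

Lemma defect_lipschitz_pt K d m n R0 T : exists Lp, 0 <= Lp /\ forall y y' t,
  bounded (dK K * d * m) R0 y -> bounded (dK K * d * m) R0 y' -> Rabs t <= T ->
  defect K d m n y' t <= defect K d m n y t + Lp * dist_sup (dK K * d * m) y y'.
Proof.
  destruct (defect_lipschitz K d m n R0 T) as [Lp [HLp Hlip]]. exists Lp. split; auto.
  intros y y' t Hy Hy' Ht. specialize (Hlip y y' t t Hy Hy' Ht Ht).
  unfold Rminus in Hlip. rewrite Rplus_opp_r, Rabs_R0, Rmax_right in Hlip by apply dist_sup_nonneg.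
  apply Rabs_le_inv in Hlip. lra.
Qed.

Lemma no_common_root_near K d m n R1 T Lp r y y' t :
  (forall y y' t, bounded (dK K * d * m) R1 y -> bounded (dK K * d * m) R1 y' -> Rabs t <= T ->
     defect K d m n y' t <= defect K d m n y t + Lp * dist_sup (dK K * d * m) y y') ->
  bounded (dK K * d * m) R1 y -> bounded (dK K * d * m) R1 y' -> Rabs t <= T ->
  r <= defect K d m n y t -> Lp * dist_sup (dK K * d * m) y' y < r -> ~ common_root K d m n y' t.
Proof.
  intros Hlip Hy Hy' Ht Hr Hd. apply no_common_root_of_defect.
  specialize (Hlip y' y t Hy' Hy Ht). lra.
Qed.

(** * Lipschitz images of a box miss a cube *)

Fixpoint encode (b : nat) (f : nat -> nat) (D : nat) : nat :=
  match D with 0 => 0%nat | S D' => (f 0%nat + b * encode b (fun c => f (S c)) D')%nat end.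

Lemma encode_lt b D : forall f, (forall c, (c < D)%nat -> (f c < b)%nat) -> (encode b f D < b ^ D)%nat.
Proof.
  induction D; intros f H; simpl; [lia|].
  assert (encode b (fun c => f (S c)) D < b ^ D)%nat by (apply IHD; intros; apply H; lia).
  assert (f 0%nat < b)%nat by (apply H; lia). nia.
Qed.

Lemma encode_inj b D : forall f g, (forall c, (c < D)%nat -> (f c < b)%nat /\ (g c < b)%nat) ->
  encode b f D = encode b g D -> forall c, (c < D)%nat -> f c = g c.
Proof.
  induction D; intros f g H E c Hc; [lia|]. simpl in E.
  destruct (H 0%nat ltac:(lia)) as [H1 H2].
  rewrite !(Nat.mul_comm b) in E. rewrite !(Nat.add_comm (f 0%nat)), (Nat.add_comm (g 0%nat)) in E.
  apply mul_add_inj in E; auto. destruct E as [E1 E2].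
  destruct c; auto.
  apply (IHD (fun c => f (S c)) (fun c => g (S c))); auto; [|lia].
  intros c' Hc'; apply H; lia.
Qed.

Lemma encode_pair_lt Kf N Dp l f : (l < Kf)%nat -> (forall c, (c < Dp)%nat -> (f c < N)%nat) ->
  (l + Kf * encode N f Dp < Kf * N ^ Dp)%nat.
Proof. intros Hl Hf. pose proof (encode_lt N Dp f Hf). nia. Qed.

Lemma encode_pair_inj Kf N Dp l l' f f' : (l < Kf)%nat -> (l' < Kf)%nat ->
  (forall c, (c < Dp)%nat -> (f c < N)%nat /\ (f' c < N)%nat) ->
  (l + Kf * encode N f Dp = l' + Kf * encode N f' Dp)%nat -> l = l' /\ forall c, (c < Dp)%nat -> f c = f' c.
Proof.
  intros Hl Hl' Hf E. rewrite !(Nat.mul_comm Kf), (Nat.add_comm l), (Nat.add_comm l') in E.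
  apply mul_add_inj in E as [Henc ->]; auto. split; auto. apply (encode_inj N Dp); auto.
Qed.

Definition digit (b tau c : nat) : nat := ((tau / b ^ c) mod b)%nat.

Lemma digits_inj b E : (1 <= b)%nat -> forall tau tau', (tau < b ^ E)%nat -> (tau' < b ^ E)%nat ->
  (forall c, (c < E)%nat -> digit b tau c = digit b tau' c) -> tau = tau'.
Proof.
  intros Hb. induction E; intros tau tau' H1 H2 H; simpl in *; [lia|].
  assert (E0 := H 0%nat ltac:(lia)). unfold digit in E0. rewrite Nat.pow_0_r, !Nat.div_1_r in E0.
  assert (Hq : (tau / b = tau' / b)%nat).
  { apply IHE.
    - apply Nat.Div0.div_lt_upper_bound; lia.
    - apply Nat.Div0.div_lt_upper_bound; lia.
    - intros c Hc. specialize (H (S c) ltac:(lia)). unfold digit in *. simpl in H.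
      rewrite <- !Nat.Div0.div_div in H. auto. }
  rewrite (Nat.div_mod tau b), (Nat.div_mod tau' b) by lia. congruence.
Qed.

Lemma digit_lt b tau c : (1 <= b)%nat -> (digit b tau c < b)%nat.
Proof. intros; unfold digit; apply Nat.mod_upper_bound; lia. Qed.

Definition box (Dp : nat) (p : nat -> R) : Prop := forall i, (i < Dp)%nat -> 0 <= p i <= 1.

Lemma exists_uniform_lipschitz Dp E Kf (F : nat -> (nat -> R) -> nat -> R) :
  (forall l c, (l < Kf)%nat -> (c < E)%nat -> BL Dp (box Dp) (fun p => F l p c)) ->
  exists Lc, 0 <= Lc /\ forall l c p q, (l < Kf)%nat -> (c < E)%nat -> box Dp p -> box Dp q ->
    Rabs (F l p c - F l q c) <= Lc * dist_sup Dp p q.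
Proof.
  intros HBL.
  set (P := fun l c Lc => 0 <= Lc /\ forall p q, box Dp p -> box Dp q ->
                            Rabs (F l p c - F l q c) <= Lc * dist_sup Dp p q).
  assert (Hmono : forall l c a b, P l c a -> a <= b -> P l c b).
  { intros l c a b [Ha H] Hab. split; [lra|]. intros p q Hp Hq. eapply Rle_trans; [apply H; auto|].
    apply Rmult_le_compat_r; auto. apply dist_sup_nonneg. }
  destruct (fin_max Kf (fun l Lc => forall c, (c < E)%nat -> P l c Lc)) as [Lc HLc].
  - intros l a b H Hab c Hc. eapply Hmono; eauto.
  - intros l Hl. apply (fin_max E (P l)); [intros; eapply Hmono; eauto|].
    intros c Hc. destruct (HBL l c Hl Hc) as [_ [L0 [_ [HL0 [_ H0]]]]]. exists L0. split; auto.
  - exists (Rmax 0 Lc). split; [apply Rmax_l|]. intros l c p q Hl Hc Hp Hq.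
    destruct (Hmono l c Lc (Rmax 0 Lc) (HLc l Hl c Hc) (Rmax_r _ _)) as [_ H]. auto.
Qed.

Lemma pigeonhole (f : nat -> nat) A B :
  (forall x, (x < A)%nat -> (f x < B)%nat) ->
  (forall x y, (x < A)%nat -> (y < A)%nat -> f x = f y -> x = y) -> (A <= B)%nat.
Proof.
  intros Hf Hinj.
  assert (Hn : (length (map f (seq 0 A)) <= length (seq 0 B))%nat).
  { apply NoDup_incl_length.
    - apply NoDup_map_NoDup_ForallPairs; [|apply seq_NoDup].
      intros x y Hx Hy Hxy. apply in_seq in Hx; apply in_seq in Hy. apply Hinj; auto; lia.
    - intros z Hz. apply in_map_iff in Hz. destruct Hz as [x [<- Hx]]. apply in_seq in Hx.
      apply in_seq. split; [lia|]. simpl. apply Hf; lia. }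
  rewrite length_map, !length_seq in Hn. exact Hn.
Qed.

(* With [M = Kf alpha^Dp + 1] there are more grid points [(M+1)^E] in the cube than
   pairs (family, cell) [Kf (alpha M)^Dp] in the boxes, since [Dp < E]. *)
Lemma grid_count Kf alpha Dp E : (Dp < E)%nat ->
  (Kf * (alpha * (Kf * alpha ^ Dp + 1)) ^ Dp < S (Kf * alpha ^ Dp + 1) ^ E)%nat.
Proof.
  intros HDE. set (M := (Kf * alpha ^ Dp + 1)%nat).
  assert (H1 : (Kf * (alpha * M) ^ Dp < M ^ S Dp)%nat).
  { rewrite Nat.pow_mul_l. simpl.
    assert (0 < M ^ Dp)%nat by (apply Nat.neq_0_lt_0, Nat.pow_nonzero; unfold M; lia).
    assert (HMd : M = (Kf * alpha ^ Dp + 1)%nat) by reflexivity.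
    set (X := (alpha ^ Dp)%nat) in *. set (Y := (M ^ Dp)%nat) in *. clearbody X Y.
    rewrite HMd at 1. nia. }
  assert (H2 : (M ^ S Dp <= M ^ E)%nat) by (apply Nat.pow_le_mono_r; unfold M; lia).
  assert (H3 : (M ^ E < S M ^ E)%nat) by (apply Nat.pow_lt_mono_l; lia).
  lia.
Qed.

Lemma exists_grid_cell N : (1 <= N)%nat -> exists cell : R -> nat, forall x, 0 <= x <= 1 ->
  (cell x < N)%nat /\ INR (cell x) <= x * INR N <= INR (cell x) + 1.
Proof.
  intros HN. exists (fun x => epsilon (inhabits 0%nat) (fun k => (k < N)%nat /\ INR k <= x * INR N <= INR k + 1)).
  intros x Hx. apply epsilon_spec. apply floor_cell; auto. pose proof (pos_INR N). split; nra.
Qed.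

Lemma dist_sup_same_cell Dp N (cell : R -> nat) p q : 0 < INR N ->
  (forall x, 0 <= x <= 1 -> INR (cell x) <= x * INR N <= INR (cell x) + 1) ->
  box Dp p -> box Dp q -> (forall c, (c < Dp)%nat -> cell (p c) = cell (q c)) ->
  dist_sup Dp p q <= 1 / INR N.
Proof.
  intros HN Hcell Hp Hq Hpq. apply dist_sup_le; [left; apply Rdiv_lt_0_compat; lra|]. intros c Hc.
  pose proof (Hcell _ (Hp c Hc)) as H1. pose proof (Hcell _ (Hq c Hc)) as H2. rewrite (Hpq c Hc) in H1.
  apply (Rmult_le_reg_r (INR N)); auto. unfold Rdiv. rewrite Rmult_1_l, Rinv_l by lra.
  rewrite <- (Rabs_pos_eq (INR N)) at 1 by lra. rewrite <- Rabs_mult.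
  apply Rabs_le. split; nra.
Qed.

Lemma lipschitz_mesh Lc eta : 0 <= Lc -> 0 < eta -> exists alpha : nat, (1 <= alpha)%nat /\
  forall M : nat, (1 <= M)%nat -> Lc * (1 / INR (alpha * M)) < eta / INR M.
Proof.
  intros HLc Heta. destruct (nat_above (Lc / eta)) as [a0 Ha0]. exists (S a0). split; [lia|].
  intros M HM. assert (HMr : 0 < INR M) by (apply lt_0_INR; lia).
  assert (Ha : 0 < INR (S a0)) by (apply lt_0_INR; lia).
  assert (Halpha : Lc < eta * INR (S a0)).
  { rewrite S_INR. apply (Rmult_lt_compat_l eta) in Ha0; auto.
    replace (eta * (Lc / eta)) with Lc in Ha0 by (field; lra). lra. }
  rewrite mult_INR. replace (Lc * (1 / (INR (S a0) * INR M))) with (Lc / INR (S a0) / INR M) by (field; lra).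
  apply Rmult_lt_compat_r; [apply Rinv_0_lt_compat; lra|].
  apply (Rmult_lt_reg_r (INR (S a0))); [lra|]. unfold Rdiv. rewrite Rmult_assoc, Rinv_l by lra. lra.
Qed.

Lemma grid_point_in_range eta M tau c : 0 < eta -> (1 <= M)%nat ->
  0 <= eta / INR M * INR (digit (S M) tau c) <= eta.
Proof.
  intros Heta HM. assert (HMr : 0 < INR M) by (apply lt_0_INR; lia).
  pose proof (digit_lt (S M) tau c ltac:(lia)).
  assert (INR (digit (S M) tau c) <= INR M) by (apply le_INR; lia).
  pose proof (pos_INR (digit (S M) tau c)).
  assert (0 < eta / INR M) by (apply Rdiv_lt_0_compat; lra).
  split; [apply Rmult_le_pos; lra|].
  replace eta with (eta / INR M * INR M) at 2 by (field; lra). apply Rmult_le_compat_l; lra.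
Qed.

(* Encode a grid point [tau] by the family hitting it and the cells of its preimage: two
   grid points with the same code have images of points at distance [<= 1/N], so they
   differ by less than the mesh [eta/M]. *)
Lemma lipschitz_images_miss_cube Dp E Kf (F : nat -> (nat -> R) -> nat -> R) (eta : R) :
  (Dp < E)%nat -> 0 < eta ->
  (forall l c, (l < Kf)%nat -> (c < E)%nat -> BL Dp (box Dp) (fun p => F l p c)) ->
  ~ (forall w : nat -> R, (forall c, (c < E)%nat -> 0 <= w c <= eta) ->
       exists lp : nat * (nat -> R), (fst lp < Kf)%nat /\ box Dp (snd lp) /\
         forall c, (c < E)%nat -> F (fst lp) (snd lp) c = w c).
Proof.
  intros HDE Heta HBL Hall.
  destruct (exists_uniform_lipschitz Dp E Kf F HBL) as [Lc [HLc0 HLc]].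
  destruct (lipschitz_mesh Lc eta HLc0 Heta) as [alpha [Halpha Hmesh]].
  set (M := (Kf * alpha ^ Dp + 1)%nat). set (N := (alpha * M)%nat).
  assert (HM : (1 <= M)%nat) by (unfold M; lia).
  assert (HNr : 0 < INR N) by (apply lt_0_INR; unfold N; nia).
  specialize (Hmesh M HM). fold N in Hmesh.
  set (wg := fun tau c => eta / INR M * INR (digit (S M) tau c)).
  assert (Hwg : forall tau c, (c < E)%nat -> 0 <= wg tau c <= eta) by (intros; apply grid_point_in_range; auto).
  set (sel := fun tau => epsilon (inhabits (0%nat, fun _ : nat => 0))
     (fun lp : nat * (nat -> R) => (fst lp < Kf)%nat /\ box Dp (snd lp) /\
        forall c, (c < E)%nat -> F (fst lp) (snd lp) c = wg tau c)).
  assert (Hsel : forall tau, (fst (sel tau) < Kf)%nat /\ box Dp (snd (sel tau)) /\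
        forall c, (c < E)%nat -> F (fst (sel tau)) (snd (sel tau)) c = wg tau c)
    by (intros tau; apply epsilon_spec, Hall, Hwg).
  destruct (exists_grid_cell N ltac:(unfold N; nia)) as [cell Hcell].
  set (code := fun tau => (fst (sel tau) + Kf * encode N (fun c => cell (snd (sel tau) c)) Dp)%nat).
  pose proof (grid_count Kf alpha Dp E HDE) as Hcount. fold M in Hcount. fold N in Hcount.
  enough (S M ^ E <= Kf * N ^ Dp)%nat by lia.
  apply (pigeonhole code).
  - intros tau _. destruct (Hsel tau) as [H1 [H2 _]].
    apply encode_pair_lt; auto. intros c Hc; apply Hcell, H2; auto.
  - intros tau tau' Ht Ht' Hcode.
    destruct (Hsel tau) as [Hl1 [Hb1 HF1]]. destruct (Hsel tau') as [Hl2 [Hb2 HF2]].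
    assert (Hcb : forall c, (c < Dp)%nat -> (cell (snd (sel tau) c) < N)%nat /\ (cell (snd (sel tau') c) < N)%nat)
      by (intros c Hc'; split; apply Hcell; [apply Hb1|apply Hb2]; auto).
    destruct (encode_pair_inj Kf N Dp _ _ _ _ Hl1 Hl2 Hcb Hcode) as [Hl Hcells].
    assert (Hd : dist_sup Dp (snd (sel tau)) (snd (sel tau')) <= 1 / INR N)
      by (apply (dist_sup_same_cell Dp N cell); auto; intros; apply Hcell; auto).
    apply (digits_inj (S M) E); [lia|auto|auto|intros c Hc].
    assert (HMr : 0 < INR M) by (apply lt_0_INR; lia).
    apply (nat_eq_of_close_scaled (eta / INR M)); [apply Rdiv_lt_0_compat; lra|].
    specialize (HLc _ c _ _ Hl1 Hc Hb1 Hb2). rewrite HF1, Hl, HF2 in HLc by auto.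
    eapply Rle_lt_trans; [apply HLc|]. eapply Rle_lt_trans; [|apply Hmesh].
    apply Rmult_le_compat_l; auto.
Qed.

Lemma lipschitz_avoid Dp E Kf (F : nat -> (nat -> R) -> nat -> R) (eta : R) :
  (Dp < E)%nat -> 0 < eta ->
  (forall l c, (l < Kf)%nat -> (c < E)%nat -> BL Dp (box Dp) (fun p => F l p c)) ->
  exists w : nat -> R, (forall c, (c < E)%nat -> 0 <= w c <= eta) /\
    forall l p, (l < Kf)%nat -> box Dp p -> exists c, (c < E)%nat /\ F l p c <> w c.
Proof.
  intros HDE Heta HBL. apply NNPP. intros Hno.
  apply (lipschitz_images_miss_cube Dp E Kf F eta HDE Heta HBL). intros w Hw.
  apply NNPP. intros Hn. apply Hno. exists w. split; auto.
  intros l p Hl Hp. apply NNPP. intros H'. apply Hn. exists (l, p). simpl. do 2 (split; auto).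
  intros c Hc. apply NNPP. intros H''. apply H'. exists c. auto.
Qed.

Definition pt3 (a b c : R) : nat -> R := fun i => match i with 0%nat => a | 1%nat => b | _ => c end.

Lemma box3_pt3 a b c : 0 <= a <= 1 -> 0 <= b <= 1 -> 0 <= c <= 1 -> box 3 (pt3 a b c).
Proof. intros Ha Hb Hc i Hi. destruct i as [|[|[|]]]; simpl; auto; lia. Qed.

Lemma BL_box3 i : (i < 3)%nat -> BL 3 (box 3) (fun p => p i).
Proof. intros Hi. apply (BL_proj _ _ _ 1); auto. intros p Hp. specialize (Hp i Hi). rewrite Rabs_pos_eq; lra. Qed.

Ltac solve_BL3 :=
  repeat first [apply BL_add | apply BL_mul | apply BL_sub | apply BL_const | apply BL_box3; lia].

Lemma box3_rescale a b t beta T : 0 <= a <= 1 -> beta <= b <= 1 -> beta < 1 -> 0 < T -> Rabs t <= T ->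
  box 3 (pt3 a ((b - beta) / (1 - beta)) ((t / T + 1) / 2)).
Proof.
  intros Ha Hb Hbeta HT Ht. apply Rabs_le_inv in Ht. apply box3_pt3; [lra| |].
  - split; [unfold Rdiv; apply Rmult_le_pos; [lra|left; apply Rinv_0_lt_compat; lra]|].
    apply (Rmult_le_reg_r (1 - beta)); [lra|]. unfold Rdiv. rewrite Rmult_assoc, Rinv_l, Rmult_1_r by lra. lra.
  - assert (-1 <= t / T <= 1).
    { split; apply (Rmult_le_reg_r T); auto; unfold Rdiv; rewrite Rmult_assoc, Rinv_l, Rmult_1_r by lra; lra. }
    lra.
Qed.

(* Each family [l] is parametrised by [p] in a 3-dimensional box (a point of a triangle
   and a candidate root).  By [perturb_forced], [p] becomes bad for at most one value of
   the four slots, a Lipschitz function of [p]; a [w] outside all these images works. *)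
Lemma generic_perturbation K d m n (nf : nat) (Y : nat -> (nat -> R) -> nat -> R)
  (Bc Tt : nat -> (nat -> R) -> R) (beta eta : R) :
  (1 <= n)%nat -> (n <= d)%nat -> (4 <= dK K * m * n)%nat -> 0 < beta -> 0 < eta ->
  (forall l i, (l < nf)%nat -> (i < dK K * d * m)%nat -> BL 3 (box 3) (fun p => Y l p i)) ->
  (forall l, (l < nf)%nat -> BL 3 (box 3) (Bc l)) ->
  (forall l p, (l < nf)%nat -> box 3 p -> beta <= Bc l p) ->
  (forall l, (l < nf)%nat -> BL 3 (box 3) (Tt l)) ->
  exists w, (forall e, (e < 4)%nat -> 0 <= w e <= eta) /\
    forall l p, (l < nf)%nat -> box 3 p ->
      ~ common_root K d m n (fun i => Y l p i + Bc l p * perturb K d n w i) (Tt l p).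
Proof.
  intros Hn Hnd H4 Hb He HY HB HBb HT.
  destruct (lipschitz_avoid 3 4 nf (fun l p e => forced_value K d n (Y l p) (Tt l p) e * / Bc l p) eta) as [w [Hw1 Hw2]]; auto.
  { intros l c Hl Hc. apply BL_mul.
    - apply BL_forced_value with (m := m); auto. apply slot_poly_lt; auto.
    - apply (BL_inv _ _ _ beta); auto. }
  exists w. split; auto. intros l p Hl Hp HZ.
  destruct (Hw2 l p Hl Hp) as [e [He4 Hne]]. apply Hne.
  assert (E : (fun i => Y l p i + Bc l p * perturb K d n w i) = (fun i => Y l p i + perturb K d n (fun e => Bc l p * w e) i)).
  { apply functional_extensionality. intros i. rewrite perturb_scale. auto. }
  rewrite E in HZ. pose proof (perturb_forced K d m n (Y l p) _ (Tt l p) Hn Hnd H4 HZ e He4) as Hx.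
  simpl in Hx. rewrite <- Hx. pose proof (HBb l p Hl Hp). field. lra.
Qed.

(** * Margins and generic triangles *)

Lemma defect_attains_min K d m n R0 T y : 0 <= T -> bounded (dK K * d * m) R0 y ->
  exists t0, Rabs t0 <= T /\ forall t, Rabs t <= T -> defect K d m n y t0 <= defect K d m n y t.
Proof.
  intros HT Hy. destruct (defect_lipschitz K d m n R0 T) as [Lp [HLp Hlip]].
  destruct (continuity_ab_min (fun t => defect K d m n y (clamp (-T) T t)) (-T) T) as [t0 [H1 H2]]; [lra| |].
  - intros c _. apply cont_pt_eps. intros eps Heps. exists (eps / (Lp + 1)). split; [apply Rdiv_lt_0_compat; lra|].
    intros x Hx. eapply Rle_lt_trans; [apply Hlip; auto; apply Rabs_le; apply clamp_in; lra|].
    rewrite dist_sup_refl, Rmax_left by apply Rabs_pos.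
    pose proof (clamp_lip (-T) T x c ltac:(lra)).
    apply (Rle_lt_trans _ (Lp * (eps / (Lp + 1)))); [apply Rmult_le_compat_l; lra|apply lip_small; auto].
  - exists t0. split; [apply Rabs_le; auto|]. intros t Ht. apply Rabs_le_inv in Ht.
    specialize (H1 t Ht). rewrite !clamp_id in H1 by lra. auto.
Qed.

(* The minimum of [defect y] over the roots [|t| <= T]; it is junk unless [y] is bounded. *)
Definition min_defect K d m n (T : R) (y : nat -> R) : R :=
  defect K d m n y (epsilon (inhabits 0) (fun t0 => Rabs t0 <= T /\
    forall t, Rabs t <= T -> defect K d m n y t0 <= defect K d m n y t)).

Lemma min_defect_spec K d m n R0 T y : 0 <= T -> bounded (dK K * d * m) R0 y ->
  (exists t0, Rabs t0 <= T /\ min_defect K d m n T y = defect K d m n y t0) /\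
  forall t, Rabs t <= T -> min_defect K d m n T y <= defect K d m n y t.
Proof.
  intros HT Hy. unfold min_defect.
  destruct (epsilon_spec (inhabits 0) _ (defect_attains_min K d m n R0 T y HT Hy)) as [H1 H2].
  split; [eexists; split; [exact H1|reflexivity]|exact H2].
Qed.

Lemma min_defect_lipschitz K d m n R0 T : 0 <= T -> exists Lp, 0 <= Lp /\ forall y y',
  bounded (dK K * d * m) R0 y -> bounded (dK K * d * m) R0 y' ->
  min_defect K d m n T y <= min_defect K d m n T y' + Lp * dist_sup (dK K * d * m) y y'.
Proof.
  intros HT. destruct (defect_lipschitz K d m n R0 T) as [Lp [HLp Hlip]].
  exists Lp. split; auto. intros y y' Hy Hy'.
  destruct (min_defect_spec K d m n R0 T y HT Hy) as [_ Hmin].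
  destruct (min_defect_spec K d m n R0 T y' HT Hy') as [[t0 [Ht0 ->]] _].
  specialize (Hmin t0 Ht0). specialize (Hlip y y' t0 t0 Hy Hy' Ht0 Ht0).
  unfold Rminus in Hlip. rewrite Rplus_opp_r, Rabs_R0, Rmax_right in Hlip by apply dist_sup_nonneg.
  apply Rabs_le_inv in Hlip. lra.
Qed.

Lemma cont_path_lin N (A B : nat -> R) Bb : (forall i, (i < N)%nat -> Rabs (B i) <= Bb) ->
  cont_path N (fun s i => A i + s * B i).
Proof.
  intros HB s0 _ eps Heps. pose proof (Rabs_pos Bb).
  exists (eps / (Rabs Bb + 1)). split; [apply Rdiv_lt_0_compat; lra|].
  intros s _ Hs i Hi. replace (A i + s * B i - (A i + s0 * B i)) with ((s - s0) * B i) by ring.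
  rewrite Rabs_mult. specialize (HB i Hi). pose proof (Rabs_pos (B i)). pose proof (Rle_abs Bb).
  pose proof (Rabs_pos (s - s0)).
  apply (Rle_lt_trans _ (Rabs (s - s0) * (Rabs Bb + 1))); [apply Rmult_le_compat_l; lra|].
  apply (Rmult_lt_reg_r (/ (Rabs Bb + 1))); [apply Rinv_0_lt_compat; lra|].
  rewrite Rmult_assoc, Rinv_r, Rmult_1_r by lra. auto.
Qed.

Lemma cont_path_segment N R0 x y : bounded N R0 x -> bounded N R0 y ->
  cont_path N (fun s i => x i + s * (y i - x i)).
Proof.
  intros Hx Hy. apply (cont_path_lin _ _ _ (2 * R0)). intros i Hi.
  eapply Rle_trans; [apply Rabs_triang|]. rewrite Rabs_Ropp. specialize (Hx i Hi); specialize (Hy i Hi). lra.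
Qed.

Lemma path_attains_min N (S : (nat -> R) -> Prop) (rho : (nat -> R) -> R) Lp p : 0 <= Lp ->
  (forall y y', S y -> S y' -> rho y <= rho y' + Lp * dist_sup N y y') ->
  cont_path N p -> (forall s, in01 s -> S (p s)) ->
  exists s0, in01 s0 /\ forall s, in01 s -> rho (p s0) <= rho (p s).
Proof.
  intros HLp Hrho Hc HS.
  assert (Hcl01 : forall s, in01 (clamp 0 1 s)) by (intros; unfold in01; apply clamp_in; lra).
  destruct (continuity_ab_min (fun s => rho (p (clamp 0 1 s))) 0 1) as [s0 [Hs2 Hs1]]; [lra| |].
  - intros c _. apply cont_pt_eps. intros eps Heps.
    destruct (Hc (clamp 0 1 c) (Hcl01 c) (eps / (Lp + 1))) as [delta [Hd Hd']]; [apply Rdiv_lt_0_compat; lra|].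
    exists delta. split; auto. intros x Hx.
    assert (Hdist : dist_sup N (p (clamp 0 1 x)) (p (clamp 0 1 c)) <= eps / (Lp + 1)).
    { apply dist_sup_le; [left; apply Rdiv_lt_0_compat; lra|]. intros i Hi. left. apply Hd'; auto.
      eapply Rle_lt_trans; [apply clamp_lip; lra|auto]. }
    pose proof (Hrho _ _ (HS _ (Hcl01 x)) (HS _ (Hcl01 c))).
    pose proof (Hrho _ _ (HS _ (Hcl01 c)) (HS _ (Hcl01 x))). rewrite dist_sup_sym in H0.
    assert (Lp * dist_sup N (p (clamp 0 1 x)) (p (clamp 0 1 c)) < eps).
    { apply (Rle_lt_trans _ (Lp * (eps / (Lp + 1)))); [apply Rmult_le_compat_l; auto|apply lip_small; auto]. }
    apply Rabs_def1; lra.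
  - exists (clamp 0 1 s0). split; auto. intros s Hs. specialize (Hs2 s Hs).
    rewrite (clamp_id 0 1 s) in Hs2 by auto. auto.
Qed.

(* A continuous positive function has a positive minimum on [[0,1] x [-R0-1, R0+1]]. *)
Lemma defect_margin K d m n (R0 : R) (p : R -> nat -> R) :
  (1 <= m)%nat -> (1 <= n)%nat -> 0 <= R0 ->
  cont_path (dK K * d * m) p -> (forall s, in01 s -> bounded (dK K * d * m) R0 (p s)) ->
  (forall s, in01 s -> forall t, ~ common_root K d m n (p s) t) ->
  exists r, 0 < r /\ forall s, in01 s -> forall t, Rabs t <= R0 + 1 -> r <= defect K d m n (p s) t.
Proof.
  intros Hm Hn HR Hc Hb HQ.
  destruct (min_defect_lipschitz K d m n R0 (R0 + 1)) as [Lp [HLp Hlip]]; [lra|].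
  destruct (path_attains_min _ _ _ Lp p HLp Hlip Hc Hb) as [s0 [Hs0 Hmin]].
  exists (min_defect K d m n (R0 + 1) (p s0)). split.
  - destruct (min_defect_spec K d m n R0 (R0 + 1) (p s0)) as [[t0 [_ ->]] _]; [lra|auto|].
    apply defect_pos, HQ; auto.
  - intros s Hs t Ht. destruct (min_defect_spec K d m n R0 (R0 + 1) (p s)) as [_ Hs']; [lra|auto|].
    specialize (Hmin s Hs). specialize (Hs' t Ht). lra.
Qed.

Lemma edges_margin K d m n nf (X V : nat -> nat -> R) R1 :
  (1 <= m)%nat -> (1 <= n)%nat -> 0 <= R1 ->
  (forall l, (l < nf)%nat -> bounded (dK K * d * m) R1 (X l) /\ bounded (dK K * d * m) R1 (V l)) ->
  (forall l a, (l < nf)%nat -> 0 <= a <= 1 -> forall t,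
     ~ common_root K d m n (fun i => X l i + a * (V l i - X l i)) t) ->
  exists r, 0 < r /\ forall l a t, (l < nf)%nat -> 0 <= a <= 1 -> Rabs t <= R1 + 1 ->
    r <= defect K d m n (fun i => X l i + a * (V l i - X l i)) t.
Proof.
  intros Hm Hn HR1 HXV Hedge.
  destruct (fin_min nf (fun l r => forall a, 0 <= a <= 1 -> forall t, Rabs t <= R1 + 1 ->
               r <= defect K d m n (fun i => X l i + a * (V l i - X l i)) t)) as [r [Hr Hmarg]].
  - intros i a b H [Hb Hba] a0 Ha0 t Ht. specialize (H a0 Ha0 t Ht). lra.
  - intros l Hl. destruct (HXV l Hl) as [HX HV].
    destruct (defect_margin K d m n R1 (fun s i => X l i + s * (V l i - X l i)) Hm Hn HR1
                (cont_path_segment _ R1 _ _ HX HV) (fun s Hs => bounded_segment _ R1 _ _ s Hs HX HV)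
                (fun s Hs => Hedge l s Hl Hs)) as [r [Hr H]].
    exists r. split; auto.
  - exists r. split; [auto|]. intros l a t Hl Ha Ht. apply Hmarg; auto.
Qed.

(* The rescaled parameters [(a, (b - beta)/(1 - beta), t)] range over a 3-box, and the
   perturbation enters with the weight [b >= beta]. *)
Lemma generic_triangles K d m n nf (X V : nat -> nat -> R) (G : nat -> R) beta T eta :
  (1 <= n)%nat -> (n <= d)%nat -> (4 <= dK K * m * n)%nat -> 0 < beta <= 1/2 -> 0 < T -> 0 < eta ->
  exists w, (forall e, (e < 4)%nat -> 0 <= w e <= eta) /\
    forall l a b t, (l < nf)%nat -> 0 <= a <= 1 -> beta <= b <= 1 -> Rabs t <= T ->
      ~ common_root K d m n (fun i => X l i + a * (V l i - X l i) + b * (G i + perturb K d n w i - X l i)) t.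
Proof.
  intros Hn Hnd H4 Hbeta HT Heta.
  set (Tt := fun (_ : nat) (p : nat -> R) => T * (2 * p 2%nat - 1)).
  set (Bc := fun (_ : nat) (p : nat -> R) => beta + (1 - beta) * p 1%nat).
  set (Y := fun l (p : nat -> R) i => X l i + p 0%nat * (V l i - X l i) + Bc l p * (G i - X l i)).
  destruct (generic_perturbation K d m n nf Y Bc Tt beta eta) as [w [Hw Hgen]]; auto; try lra.
  { intros l i Hl Hi. unfold Y, Bc. solve_BL3. }
  { intros l Hl. unfold Bc. solve_BL3. }
  { intros l p Hl Hp. specialize (Hp 1%nat ltac:(lia)). unfold Bc. nra. }
  { intros l Hl. unfold Tt. solve_BL3. }
  exists w. split; auto. intros l a b t Hl Ha Hb Ht HZ.
  set (pp := pt3 a ((b - beta) / (1 - beta)) ((t / T + 1) / 2)).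
  assert (Hpp : box 3 pp) by (apply box3_rescale; lra).
  assert (Ett : Tt l pp = t) by (unfold Tt, pp, pt3; field; lra).
  apply (Hgen l pp Hl Hpp). rewrite Ett. revert HZ. apply common_root_ext. intros i Hi.
  unfold Y, Bc, pp, pt3. simpl.
  replace (beta + (1 - beta) * ((b - beta) / (1 - beta))) with b by (field; lra). ring.
Qed.

(* Triangles spanned by good edges [X l, V l] and a perturbed apex [G + perturb w]:
   near an edge ([b < beta]) the edge margin protects the triangle, elsewhere
   [generic_triangles] applies. *)
Lemma triangle_perturbation K d m n (nf : nat) (X V : nat -> nat -> R) (G : nat -> R) (R0 eta : R) :
  (1 <= m)%nat -> (1 <= n)%nat -> (n <= d)%nat -> (4 <= dK K * m * n)%nat -> 0 <= R0 -> 0 < eta <= 1 ->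
  (forall l, (l < nf)%nat -> bounded (dK K * d * m) R0 (X l) /\ bounded (dK K * d * m) R0 (V l)) ->
  bounded (dK K * d * m) R0 G ->
  (forall l a, (l < nf)%nat -> 0 <= a <= 1 -> forall t, ~ common_root K d m n (fun i => X l i + a * (V l i - X l i)) t) ->
  exists w, (forall e, (e < 4)%nat -> 0 <= w e <= eta) /\
    forall l a b, (l < nf)%nat -> 0 <= a -> 0 <= b -> a + b <= 1 -> forall t,
      ~ common_root K d m n (fun i => X l i + a * (V l i - X l i) + b * (G i + perturb K d n w i - X l i)) t.
Proof.
  intros Hm Hn Hnd H4 HR0 Heta HXV HG Hedge.
  set (N := (dK K * d * m)%nat). fold N in HXV, HG.
  set (R1 := R0 + 4). set (T := R1 + 1).
  assert (HXV1 : forall l, (l < nf)%nat -> bounded N R1 (X l) /\ bounded N R1 (V l)).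
  { intros l Hl. destruct (HXV l Hl). split; apply (bounded_mono N R0); auto; unfold R1; lra. }
  destruct (edges_margin K d m n nf X V R1) as [r [Hr Hmarg]]; auto; [unfold R1; lra|].
  destruct (defect_lipschitz_pt K d m n R1 T) as [Lp [HLp Hlip]].
  destruct (small_weight r (Lp * (2 * R1))) as [beta [Hbeta Hbeta2]]; auto.
  { apply Rmult_le_pos; unfold R1; lra. }
  destruct (generic_triangles K d m n nf X V G beta T eta) as [w [Hw Hgen]]; auto; try (unfold T, R1; lra).
  exists w. split; auto.
  intros l a b Hl Ha Hb Hab t. destruct (HXV1 l Hl) as [HX HV].
  set (Z := fun i => G i + perturb K d n w i).
  assert (HZb : bounded N R1 Z) by (apply (bounded_mono N (R0 + 4 * eta)); [unfold R1; lra|apply bounded_perturb; auto]).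
  set (P := fun i => X l i + a * (V l i - X l i) + b * (Z i - X l i)).
  assert (HPb : bounded N R1 P) by (apply bounded_triangle; auto).
  destruct (Rle_dec (Rabs t) T) as [Ht|Ht]; [|apply (no_common_root_far K d m n P t R1); auto; unfold T in Ht; lra].
  destruct (Rlt_dec b beta) as [Hbb|Hbb]; [|apply Hgen; auto; lra].
  set (Ea := fun i => X l i + a * (V l i - X l i)).
  assert (Hd : dist_sup N P Ea <= b * (2 * R1)).
  { apply (dist_sup_add_scaled N Ea (fun i => Z i - X l i)); auto; [unfold R1; lra|].
    intros i Hi. unfold Rminus. eapply Rle_trans; [apply Rabs_triang|]. rewrite Rabs_Ropp.
    specialize (HZb i Hi); specialize (HX i Hi). lra. }
  apply (no_common_root_near K d m n R1 T Lp r Ea P t); auto.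
  - apply bounded_segment; auto; lra.
  - apply Hmarg; auto; lra.
  - eapply Rle_lt_trans; [|apply Hbeta2]. rewrite Rmult_assoc. apply Rmult_le_compat_l; auto.
    eapply Rle_trans; [apply Hd|]. rewrite (Rmult_comm (2 * R1)). apply Rmult_le_compat_r; unfold R1; lra.
Qed.

(** * Continuity on the square and piecewise-linear paths *)

Definition cont2 (f : R -> R -> R) : Prop :=
  forall s0 u0, in01 s0 -> in01 u0 -> forall eps, eps > 0 -> exists delta, delta > 0 /\
    forall s u, in01 s -> in01 u -> Rabs (s - s0) < delta -> Rabs (u - u0) < delta ->
      Rabs (f s u - f s0 u0) < eps.

Lemma cont2_const c : cont2 (fun _ _ => c).
Proof. intros s0 u0 _ _ eps He. exists 1. split; [lra|]. intros. unfold Rminus; rewrite Rplus_opp_r, Rabs_R0; lra. Qed.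

Lemma cont2_common f g s0 u0 e1 e2 : cont2 f -> cont2 g -> in01 s0 -> in01 u0 -> 0 < e1 -> 0 < e2 ->
  exists delta, delta > 0 /\ forall s u, in01 s -> in01 u -> Rabs (s - s0) < delta -> Rabs (u - u0) < delta ->
    Rabs (f s u - f s0 u0) < e1 /\ Rabs (g s u - g s0 u0) < e2.
Proof.
  intros Hf Hg Hs Hu He1 He2.
  destruct (Hf s0 u0 Hs Hu e1 He1) as [d1 [Hd1 H1]]. destruct (Hg s0 u0 Hs Hu e2 He2) as [d2 [Hd2 H2]].
  exists (Rmin d1 d2). split; [apply Rmin_glb_lt; auto|]. intros s u Hs' Hu' Hss Huu.
  pose proof (Rmin_l d1 d2). pose proof (Rmin_r d1 d2).
  split; [apply H1|apply H2]; auto; lra.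
Qed.

Lemma cont2_add f g : cont2 f -> cont2 g -> cont2 (fun s u => f s u + g s u).
Proof.
  intros Hf Hg s0 u0 Hs Hu eps He.
  destruct (cont2_common f g s0 u0 (eps / 2) (eps / 2)) as [delta [Hd H]]; auto; try lra.
  exists delta. split; auto. intros s u Hs' Hu' Hss Huu. destruct (H s u Hs' Hu' Hss Huu).
  replace (f s u + g s u - (f s0 u0 + g s0 u0)) with ((f s u - f s0 u0) + (g s u - g s0 u0)) by ring.
  eapply Rle_lt_trans; [apply Rabs_triang|]. lra.
Qed.

Lemma cont2_mul f g : cont2 f -> cont2 g -> cont2 (fun s u => f s u * g s u).
Proof.
  intros Hf Hg s0 u0 Hs Hu eps He.
  set (A := Rabs (f s0 u0) + 1). set (B := Rabs (g s0 u0) + 2).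
  assert (HA : 0 < A) by (unfold A; pose proof (Rabs_pos (f s0 u0)); lra).
  assert (HB : 0 < B) by (unfold B; pose proof (Rabs_pos (g s0 u0)); lra).
  destruct (cont2_common f g s0 u0 (eps / (2 * B)) (Rmin 1 (eps / (2 * A)))) as [delta [Hd H]]; auto;
    try (apply Rdiv_lt_0_compat; lra); [apply Rmin_glb_lt; [lra|apply Rdiv_lt_0_compat; lra]|].
  exists delta. split; auto. intros s u Hs' Hu' Hss Huu. destruct (H s u Hs' Hu' Hss Huu) as [H1 H2].
  pose proof (Rmin_l 1 (eps / (2 * A))). pose proof (Rmin_r 1 (eps / (2 * A))).
  assert (Hgb : Rabs (g s u) <= B) by (unfold B; pose proof (Rabs_triang_inv (g s u) (g s0 u0)); lra).
  replace (f s u * g s u - f s0 u0 * g s0 u0)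
    with ((f s u - f s0 u0) * g s u + f s0 u0 * (g s u - g s0 u0)) by ring.
  eapply Rle_lt_trans; [apply Rabs_triang|]. rewrite !Rabs_mult.
  assert (Rabs (f s u - f s0 u0) * Rabs (g s u) <= eps / (2 * B) * B)
    by (apply Rmult_le_compat; try apply Rabs_pos; lra).
  assert (Rabs (f s0 u0) * Rabs (g s u - g s0 u0) <= A * Rabs (g s u - g s0 u0))
    by (apply Rmult_le_compat_r; [apply Rabs_pos|unfold A; lra]).
  assert (A * Rabs (g s u - g s0 u0) < A * (eps / (2 * A))) by (apply Rmult_lt_compat_l; lra).
  replace (eps / (2 * B) * B) with (eps / 2) in * by (field; lra).
  replace (A * (eps / (2 * A))) with (eps / 2) in * by (field; lra).
  lra.
Qed.

Lemma cont2_opp f : cont2 f -> cont2 (fun s u => - f s u).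
Proof.
  intros Hf s0 u0 Hs Hu eps He. destruct (Hf s0 u0 Hs Hu eps He) as [d [Hd H]]. exists d. split; auto.
  intros. replace (- f s u - - f s0 u0) with (- (f s u - f s0 u0)) by ring. rewrite Rabs_Ropp. auto.
Qed.

Lemma cont2_sub f g : cont2 f -> cont2 g -> cont2 (fun s u => f s u - g s u).
Proof. intros. apply cont2_add; auto. apply cont2_opp; auto. Qed.

Lemma cont2_lip_s (f : R -> R) Lc : 0 <= Lc -> (forall s s', in01 s -> in01 s' -> Rabs (f s - f s') <= Lc * Rabs (s - s')) ->
  cont2 (fun s u => f s).
Proof.
  intros HL H s0 u0 Hs Hu eps He. exists (eps / (Lc + 1)). split; [apply Rdiv_lt_0_compat; lra|].
  intros s u Hs' Hu' Hss _. eapply Rle_lt_trans; [apply H; auto|].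
  apply (Rle_lt_trans _ (Lc * (eps / (Lc + 1)))); [apply Rmult_le_compat_l; lra|]. apply lip_small; auto.
Qed.

Lemma cont2_lip_u (f : R -> R) Lc : 0 <= Lc -> (forall s s', in01 s -> in01 s' -> Rabs (f s - f s') <= Lc * Rabs (s - s')) ->
  cont2 (fun s u => f u).
Proof.
  intros HL H s0 u0 Hs Hu eps He. exists (eps / (Lc + 1)). split; [apply Rdiv_lt_0_compat; lra|].
  intros s u Hs' Hu' _ Huu. eapply Rle_lt_trans; [apply H; auto|].
  apply (Rle_lt_trans _ (Lc * (eps / (Lc + 1)))); [apply Rmult_le_compat_l; lra|]. apply lip_small; auto.
Qed.

Lemma cont2_path N g i : cont_path N g -> (i < N)%nat -> cont2 (fun s u => g s i).
Proof.
  intros Hg Hi s0 u0 Hs Hu eps He. destruct (Hg s0 Hs eps He) as [d [Hd H]]. exists d. split; [auto|].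
  intros s u Hs' _ Hss _. apply H; auto.
Qed.

Lemma cont2_rsum k (f : nat -> R -> R -> R) : (forall l, (l < k)%nat -> cont2 (f l)) ->
  cont2 (fun s u => rsum k (fun l => f l s u)).
Proof. induction k; intros H; simpl; [apply cont2_const|]. apply cont2_add; auto. Qed.

Lemma cont2_square N H : (forall i, (i < N)%nat -> cont2 (fun s u => H s u i)) -> cont_square N H.
Proof.
  intros Hc s0 u0 Hs Hu eps He.
  destruct (fin_min N (fun i d => forall s u, in01 s -> in01 u -> Rabs (s - s0) < d -> Rabs (u - u0) < d ->
                Rabs (H s u i - H s0 u0 i) < eps)) as [d [Hd Hall]].
  { intros i a b Ha [Hb Hba] s u H1 H2 H3 H4. apply Ha; auto; lra. }
  { intros i Hi. destruct (Hc i Hi s0 u0 Hs Hu eps He) as [d [Hd H']]. exists d. split; auto. }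
  exists d. split; [auto|]. intros s u Hs1 Hu1 Hss Huu i Hi. apply Hall; auto.
Qed.

Lemma cont2_path_back N g : (forall i, (i < N)%nat -> cont2 (fun s u => g s i)) -> cont_path N g.
Proof.
  intros Hc s0 Hs eps He.
  destruct (cont2_square N (fun s u => g s) Hc s0 0 Hs ltac:(unfold in01; lra) eps He) as [d [Hd H]].
  exists d. split; auto. intros s Hs' Hss i Hi. apply (H s 0); auto; unfold in01 in *; try lra.
  unfold Rminus; rewrite Rplus_opp_r, Rabs_R0; lra.
Qed.

(* [pwlin M V] is the piecewise-linear path through [V 0, ..., V M] at the parameters
   [k / M]; [hat M l] is the tent function of the [l]-th vertex. *)
Definition hat (M l : nat) (s : R) : R := Rmax 0 (1 - Rabs (s * INR M - INR l)).

Definition pwlin (M : nat) (V : nat -> nat -> R) (s : R) (i : nat) : R := rsum (S M) (fun l => hat M l s * V l i).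

Lemma Rmax0_lip a b : Rabs (Rmax 0 a - Rmax 0 b) <= Rabs (a - b).
Proof. unfold Rmax. repeat destruct (Rle_dec _ _); apply Rabs_le; split;
  try (pose proof (Rle_abs (a - b)); pose proof (Rle_abs (- (a - b))); rewrite Rabs_Ropp in *; lra). Qed.

Lemma hat_lip M l s s' : Rabs (hat M l s - hat M l s') <= INR M * Rabs (s - s').
Proof.
  unfold hat. eapply Rle_trans; [apply Rmax0_lip|].
  replace (1 - Rabs (s * INR M - INR l) - (1 - Rabs (s' * INR M - INR l))) with
    (Rabs (s' * INR M - INR l) - Rabs (s * INR M - INR l)) by ring.
  eapply Rle_trans; [apply Rabs_triang_inv2|].
  replace (s' * INR M - INR l - (s * INR M - INR l)) with ((s' - s) * INR M) by ring.
  rewrite Rabs_mult, (Rabs_pos_eq (INR M)) by apply pos_INR. rewrite <- Rabs_Ropp.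
  replace (- (s' - s)) with (s - s') by ring. lra.
Qed.

Lemma cont2_pwlin M V i : cont2 (fun s u => pwlin M V s i).
Proof.
  unfold pwlin. apply (cont2_rsum (S M) (fun l s u => hat M l s * V l i)). intros l _.
  apply cont2_mul; [|apply cont2_const].
  apply (cont2_lip_s _ (INR M)); [apply pos_INR|]. intros; apply hat_lip.
Qed.

Lemma hat_zero M l k s : l <> k -> l <> S k -> INR k <= s * INR M <= INR k + 1 -> hat M l s = 0.
Proof.
  intros H1 H2 Hs. unfold hat. apply Rmax_left.
  destruct (Nat.lt_trichotomy l k) as [Hlt|[Heq|Hgt]]; [|lia|].
  - assert (INR (S l) <= INR k) by (apply le_INR; lia). rewrite S_INR in *.
    rewrite Rabs_pos_eq by lra. lra.
  - assert (INR (S (S k)) <= INR l) by (apply le_INR; lia). rewrite !S_INR in *.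
    rewrite Rabs_left1 by lra. lra.
Qed.

Lemma pwlin_seg M V k s i : (k < M)%nat -> INR k <= s * INR M <= INR k + 1 ->
  pwlin M V s i = (1 - (s * INR M - INR k)) * V k i + (s * INR M - INR k) * V (S k) i.
Proof.
  intros Hk Hs. unfold pwlin. rewrite (rsum_two (S M) _ k).
  2: lia.
  2: { intros l Hl H1 H2. rewrite (hat_zero M l k s) by auto. ring. }
  unfold hat. rewrite S_INR.
  rewrite (Rabs_pos_eq (s * INR M - INR k)) by lra.
  rewrite (Rabs_left1 (s * INR M - (INR k + 1))) by lra.
  rewrite !Rmax_right by lra. ring.
Qed.

Lemma pwlin_seg_exists M s : (1 <= M)%nat -> in01 s -> exists k, (k < M)%nat /\ INR k <= s * INR M <= INR k + 1.
Proof.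
  intros HM Hs. apply floor_cell; auto. unfold in01 in Hs. pose proof (pos_INR M). split; nra.
Qed.

Lemma pwlin_0 M V i : (1 <= M)%nat -> pwlin M V 0 i = V 0%nat i.
Proof. intros HM. rewrite (pwlin_seg M V 0 0 i) by (simpl; try lia; lra). simpl. ring. Qed.

Lemma pwlin_1 M V i : (1 <= M)%nat -> pwlin M V 1 i = V M i.
Proof.
  intros HM. rewrite (pwlin_seg M V (M - 1) 1 i) by (try lia; rewrite minus_INR by lia; simpl; lra).
  replace (S (M - 1)) with M by lia. rewrite minus_INR by lia. simpl. ring.
Qed.

Lemma pwlin_near N M (V : nat -> nat -> R) (g : R -> nat -> R) c s : (1 <= M)%nat -> in01 s ->
  (forall l i, (l <= M)%nat -> Rabs (s - INR l / INR M) <= 1 / INR M -> (i < N)%nat -> Rabs (V l i - g s i) <= c) ->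
  forall i, (i < N)%nat -> Rabs (pwlin M V s i - g s i) <= c.
Proof.
  intros HM Hs HV i Hi. assert (HMr : 0 < INR M) by (apply lt_0_INR; lia).
  destruct (pwlin_seg_exists M s HM Hs) as [k [Hk Hks]]. rewrite (pwlin_seg M V k s i Hk Hks).
  set (lam := s * INR M - INR k). assert (Hlam : 0 <= lam <= 1) by (unfold lam; lra).
  assert (Hnear : forall l : nat, Rabs (s * INR M - INR l) <= 1 -> Rabs (s - INR l / INR M) <= 1 / INR M).
  { intros l Hl. replace (s - INR l / INR M) with ((s * INR M - INR l) * / INR M) by (field; lra).
    rewrite Rabs_mult, (Rabs_pos_eq (/ INR M)) by (left; apply Rinv_0_lt_compat; lra).
    unfold Rdiv. rewrite Rmult_1_l. rewrite <- (Rmult_1_l (/ INR M)) at 2.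
    apply Rmult_le_compat_r; [left; apply Rinv_0_lt_compat|]; lra. }
  pose proof (HV k i ltac:(lia) (Hnear k ltac:(apply Rabs_le; lra)) Hi).
  pose proof (HV (S k) i ltac:(lia) (Hnear (S k) ltac:(rewrite S_INR; apply Rabs_le; lra)) Hi).
  replace ((1 - lam) * V k i + lam * V (S k) i - g s i)
    with ((1 - lam) * (V k i - g s i) + lam * (V (S k) i - g s i)) by ring.
  eapply Rle_trans; [apply Rabs_triang|]. rewrite !Rabs_mult, (Rabs_pos_eq (1 - lam)), (Rabs_pos_eq lam) by lra.
  assert ((1 - lam) * Rabs (V k i - g s i) <= (1 - lam) * c) by (apply Rmult_le_compat_l; lra).
  assert (lam * Rabs (V (S k) i - g s i) <= lam * c) by (apply Rmult_le_compat_l; lra). lra.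
Qed.

Lemma bounded_pwlin N M (V : nat -> nat -> R) B s : (1 <= M)%nat -> in01 s ->
  (forall l, (l <= M)%nat -> bounded N B (V l)) -> bounded N B (fun i => pwlin M V s i).
Proof.
  intros HM Hs HV i Hi. destruct (pwlin_seg_exists M s HM Hs) as [k [Hk Hks]]. rewrite (pwlin_seg M V k s i Hk Hks).
  set (lam := s * INR M - INR k). assert (Hlam : 0 <= lam <= 1) by (unfold lam; lra).
  pose proof (bounded_segment N B (V k) (V (S k)) lam Hlam (HV k ltac:(lia)) (HV (S k) ltac:(lia)) i Hi).
  replace ((1 - lam) * V k i + lam * V (S k) i) with (V k i + lam * (V (S k) i - V k i)) by ring. auto.
Qed.

Lemma path_cont_pt N g i c : cont_path N g -> (i < N)%nat -> continuity_pt (fun s => g (clamp 0 1 s) i) c.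
Proof.
  intros Hg Hi. apply cont_pt_eps. intros eps He.
  assert (Hc : in01 (clamp 0 1 c)) by (apply clamp_in; lra).
  destruct (Hg _ Hc eps He) as [d [Hd H]]. exists d. split; auto.
  intros x Hx. apply H; auto. apply clamp_in; lra. eapply Rle_lt_trans; [apply clamp_lip; lra|auto].
Qed.

Lemma path_bound N g : cont_path N g -> exists R0, 0 <= R0 /\ forall s, in01 s -> bounded N R0 (g s).
Proof.
  intros Hg.
  destruct (fin_max N (fun i a => 0 <= a /\ forall s, in01 s -> Rabs (g s i) <= a)) as [R0 HR].
  { intros i a b [Ha H] Hab. split; [lra|]. intros s Hs. specialize (H s Hs). lra. }
  { intros i Hi. destruct (continuity_ab_min (fun s => - Rabs (g (clamp 0 1 s) i)) 0 1) as [x [Hx1 Hx2]]; [lra| |].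
    - intros c _. apply cont_pt_eps. intros eps He.
      pose proof (path_cont_pt N g i c Hg Hi eps He) as Hc. destruct Hc as [d [Hd H]]. exists d. split; auto.
      intros x Hx. destruct (Req_dec x c) as [->|Hne].
      + unfold Rminus; rewrite Rplus_opp_r, Rabs_R0; lra.
      + specialize (H x (conj (conj I (not_eq_sym Hne)) Hx)). simpl in H. unfold R_dist in H.
        replace (- Rabs (g (clamp 0 1 x) i) - - Rabs (g (clamp 0 1 c) i))
          with (- (Rabs (g (clamp 0 1 x) i) - Rabs (g (clamp 0 1 c) i))) by ring.
        rewrite Rabs_Ropp. eapply Rle_lt_trans; [apply Rabs_triang_inv2|auto].
    - exists (Rabs (g (clamp 0 1 x) i)). split; [apply Rabs_pos|]. intros s Hs.
      specialize (Hx1 s Hs). rewrite (clamp_id 0 1 s) in Hx1 by auto. lra. }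
  exists (Rmax 0 R0). split; [apply Rmax_l|]. intros s Hs i Hi.
  destruct (HR i Hi) as [_ H]. eapply Rle_trans; [apply H; auto|apply Rmax_r].
Qed.

Lemma path_unif_cont N g : cont_path N g -> forall eps, 0 < eps -> exists delta, 0 < delta /\
  forall s s', in01 s -> in01 s' -> Rabs (s - s') <= delta -> forall i, (i < N)%nat -> Rabs (g s i - g s' i) <= eps.
Proof.
  intros Hg eps He.
  destruct (fin_min N (fun i d => forall s s', in01 s -> in01 s' -> Rabs (s - s') <= d -> Rabs (g s i - g s' i) <= eps))
    as [d [Hd H]].
  { intros i a b Ha [Hb Hba] s s' H1 H2 H3. apply Ha; auto; lra. }
  { intros i Hi.
    destruct (Heine (fun s => g (clamp 0 1 s) i) (fun c => 0 <= c <= 1) (compact_P3 0 1))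
      with (eps := mkposreal eps He) as [dd Hdd].
    - intros x _. apply (path_cont_pt N); auto.
    - exists (dd / 2). split; [destruct dd; simpl; lra|]. intros s s' Hs Hs' Hss.
      specialize (Hdd s s' Hs Hs'). rewrite !clamp_id in Hdd by auto. left. apply Hdd.
      destruct dd; simpl in *; lra. }
  exists d. split; [auto|]. intros s s' Hs Hs' Hss i Hi. apply H; auto.
Qed.

Lemma in01_grid k M : (k <= M)%nat -> (1 <= M)%nat -> in01 (INR k / INR M).
Proof.
  intros Hk HM. assert (HMr : 0 < INR M) by (apply lt_0_INR; lia).
  assert (INR k <= INR M) by (apply le_INR; auto). pose proof (pos_INR k). unfold in01.
  split; [apply Rmult_le_pos; [lra|left; apply Rinv_0_lt_compat; lra]|].
  apply (Rmult_le_reg_r (INR M)); auto. unfold Rdiv. rewrite Rmult_assoc, Rinv_l by lra. lra.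
Qed.

Lemma exists_mesh delta : 0 < delta -> exists M, (1 <= M)%nat /\ 1 / INR M <= delta.
Proof.
  intros Hd. destruct (nat_above (1 / delta)) as [M0 HM0]. exists (S M0). split; [lia|].
  assert (HM : INR M0 < INR (S M0)) by (apply lt_INR; lia).
  assert (0 < INR (S M0)) by (apply lt_0_INR; lia).
  assert (H2 : 1 < delta * INR (S M0)).
  { assert (1 / delta < INR (S M0)) by lra. apply (Rmult_lt_compat_l delta) in H0; auto.
    replace (delta * (1 / delta)) with 1 in H0 by (field; lra). lra. }
  unfold Rdiv; rewrite Rmult_1_l. apply (Rmult_le_reg_r (INR (S M0))); [lra|]. rewrite Rinv_l by lra. lra.
Qed.

(** * Simple connectivity *)

(* A generic perturbation of the origin; roots with [|t| > 5] are excluded by the Cauchy bound. *)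
Lemma Qspace_nonempty K d m n : (1 <= m)%nat -> (1 <= n)%nat -> (n <= d)%nat -> (4 <= dK K * m * n)%nat ->
  exists x, Qspace K d m n x.
Proof.
  intros Hm Hn Hnd H4.
  destruct (generic_perturbation K d m n 1 (fun _ _ _ => 0) (fun _ _ => 1) (fun _ p => 5 * (2 * p 2%nat - 1)) 1 1)
    as [w [Hw Hc]]; auto; try lra.
  - intros. apply BL_const.
  - intros. apply BL_const.
  - intros; lra.
  - intros. solve_BL3.
  - exists (perturb K d n w). apply (Qspace_of_bounded K d m n 4); auto.
    + intros i Hi. replace 4 with (4 * 1) by ring. apply perturb_bound. auto.
    + intros t Ht HZ. apply Rabs_le_inv in Ht.
      apply (Hc 0%nat (pt3 0 0 ((t / 5 + 1) / 2))); auto.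
      * apply box3_pt3; try lra.
      * simpl. replace (5 * (2 * ((t / 5 + 1) / 2) - 1)) with t by field.
        revert HZ. apply common_root_ext. intros; ring.
Qed.

(* The path runs from [x] to [x + perturb w] and back to [y]: its two edges are the
   triangles over the degenerate edges [x] and [y] with apex [x + perturb w]. *)
Lemma Qspace_path_connected K d m n : (1 <= m)%nat -> (1 <= n)%nat -> (n <= d)%nat -> (4 <= dK K * m * n)%nat ->
  forall x y, Qspace K d m n x -> Qspace K d m n y ->
  exists g, path_in (dK K * d * m) (Qspace K d m n) g /\ eqN (dK K * d * m) (g 0) x /\ eqN (dK K * d * m) (g 1) y.
Proof.
  intros Hm Hn Hnd H4 x y Hx Hy.
  set (N := (dK K * d * m)%nat).
  destruct (bounded_pair N x y) as [R0 [HR0 [Hbx Hby]]].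
  set (X := fun l : nat => if Nat.eqb l 0 then x else y).
  destruct (triangle_perturbation K d m n 2 X X x R0 1) as [w [Hw Htri]]; auto; try lra.
  { intros l Hl. unfold X. destruct (Nat.eqb l 0); auto. }
  { intros l a Hl Ha t HZ. apply (no_common_root_of_Qspace K d m n (X l) t); [unfold X; destruct (Nat.eqb l 0); auto|].
    revert HZ. apply common_root_ext. intros; ring. }
  set (v := fun i => x i + perturb K d n w i).
  set (VV := fun l : nat => match l with 0%nat => x | 1%nat => v | _ => y end).
  exists (pwlin 2 VV). split; [split|split].
  - apply cont2_path_back. intros i _. apply cont2_pwlin.
  - intros s Hs. destruct (pwlin_seg_exists 2 s ltac:(lia) Hs) as [k [Hk Hks]].
    apply Qspace_iff. intros t HZ. rewrite (functional_extensionality _ _ (fun i => pwlin_seg 2 VV k s i Hk Hks)) in HZ.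
    set (lam := s * INR 2 - INR k) in HZ.
    assert (Hlam : 0 <= lam <= 1) by (unfold lam; lra). clearbody lam.
    destruct k as [|[|]]; [| |lia].
    + refine (Htri 0%nat 0 lam _ _ _ _ t _); [lia|lra|lra|lra|].
      revert HZ. apply common_root_ext. intros i _. unfold VV, v, X. simpl. ring.
    + refine (Htri 1%nat 0 (1 - lam) _ _ _ _ t _); [lia|lra|lra|lra|].
      revert HZ. apply common_root_ext. intros i _. unfold VV, v, X. simpl. ring.
  - intros i _. rewrite pwlin_0 by lia. reflexivity.
  - intros i _. rewrite pwlin_1 by lia. reflexivity.
Qed.

Definition triangle_free K d m n (x0 vp v : nat -> R) : Prop :=
  forall a b, 0 <= a -> 0 <= b -> a + b <= 1 -> forall t,
    ~ common_root K d m n (fun i => x0 i + a * (vp i - x0 i) + b * (v i - x0 i)) t.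

Section LoopVertices.
Variables (K : Kfield) (d m n M : nat) (x0 : nat -> R) (gs : nat -> nat -> R) (R0 eta : R).
Hypotheses (Hm : (1 <= m)%nat) (Hn : (1 <= n)%nat) (Hnd : (n <= d)%nat) (H4 : (4 <= dK K * m * n)%nat).
Hypotheses (HR0 : 0 <= R0) (Heta : 0 < eta <= 1).
Hypothesis Hgs : forall k, (k <= M)%nat -> bounded (dK K * d * m) R0 (gs k).
Hypothesis Hgs0 : gs 0%nat = x0.
Hypothesis Hx0 : Qspace K d m n x0.

Definition next_vertex (vp gk : nat -> R) : nat -> R :=
  epsilon (inhabits x0) (fun v => (exists w, (forall e, (e < 4)%nat -> 0 <= w e <= eta) /\
      forall i, v i = gk i + perturb K d n w i) /\ triangle_free K d m n x0 vp v).

Fixpoint loop_vertex (k : nat) : nat -> R :=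
  match k with 0%nat => x0 | S k' => next_vertex (loop_vertex k') (gs (S k')) end.

Definition vertex_inv (k : nat) : Prop :=
  bounded (dK K * d * m) (R0 + 4) (loop_vertex k) /\
  (forall i, (i < dK K * d * m)%nat -> Rabs (loop_vertex k i - gs k i) <= 4 * eta) /\
  forall a, 0 <= a <= 1 -> forall t, ~ common_root K d m n (fun i => x0 i + a * (loop_vertex k i - x0 i)) t.

Lemma loop_vertex_step k : (S k <= M)%nat -> vertex_inv k ->
  (exists w, (forall e, (e < 4)%nat -> 0 <= w e <= eta) /\
     forall i, loop_vertex (S k) i = gs (S k) i + perturb K d n w i) /\
  triangle_free K d m n x0 (loop_vertex k) (loop_vertex (S k)).
Proof.
  intros Hk [Hb1 [_ He1]].
  change (loop_vertex (S k)) with (next_vertex (loop_vertex k) (gs (S k))). unfold next_vertex. apply epsilon_spec.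
  assert (Hbx0 : bounded (dK K * d * m) (R0 + 4) x0)
    by (rewrite <- Hgs0; apply (bounded_mono _ R0); [lra|apply Hgs; lia]).
  destruct (triangle_perturbation K d m n 1 (fun _ => x0) (fun _ => loop_vertex k) (gs (S k)) (R0 + 4) eta)
    as [w [Hw Ht]]; auto; try lra.
  - apply (bounded_mono _ R0); [lra|apply Hgs; auto].
  - exists (fun i => gs (S k) i + perturb K d n w i). split; [exists w; split; auto|].
    intros a b Ha Hb Hab t. apply (Ht 0%nat a b ltac:(lia) Ha Hb Hab t).
Qed.

Lemma loop_vertex_inv k : (k <= M)%nat -> vertex_inv k.
Proof.
  induction k; intros Hk.
  - split; [|split].
    + cbn. rewrite <- Hgs0. apply (bounded_mono _ R0); [lra|apply Hgs; lia].
    + intros i Hi. cbn. rewrite Hgs0. unfold Rminus; rewrite Rplus_opp_r, Rabs_R0; lra.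
    + intros a Ha t HZ. apply (no_common_root_of_Qspace K d m n x0 t Hx0). revert HZ.
      apply common_root_ext. intros; cbn; ring.
  - destruct (loop_vertex_step k Hk (IHk ltac:(lia))) as [[w [Hw Hv]] Ht].
    split; [|split].
    + intros i Hi. rewrite Hv. pose proof (perturb_bound K d n w i eta Hw).
      pose proof (Hgs (S k) Hk i Hi). eapply Rle_trans; [apply Rabs_triang|]. lra.
    + intros i Hi. rewrite Hv. replace (gs (S k) i + perturb K d n w i - gs (S k) i) with (perturb K d n w i) by ring.
      apply perturb_bound; auto.
    + intros a Ha t HZ. apply (Ht 0 a ltac:(lra) ltac:(lra) ltac:(lra) t). revert HZ.
      apply common_root_ext. intros; ring.
Qed.

End LoopVertices.

Lemma loop_vertices K d m n (g : R -> nat -> R) R0 M eta :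
  (1 <= m)%nat -> (1 <= n)%nat -> (n <= d)%nat -> (4 <= dK K * m * n)%nat -> 0 <= R0 -> 0 < eta <= 1 ->
  (1 <= M)%nat -> (forall s, in01 s -> bounded (dK K * d * m) R0 (g s)) -> Qspace K d m n (g 0) ->
  eqN (dK K * d * m) (g 0) (g 1) ->
  exists V : nat -> nat -> R, V 0%nat = g 0 /\ V M = g 0 /\
    (forall l, (l <= M)%nat -> bounded (dK K * d * m) (R0 + 4) (V l) /\
       forall i, (i < dK K * d * m)%nat -> Rabs (V l i - g (INR l / INR M) i) <= 4 * eta) /\
    forall k, (k < M)%nat -> triangle_free K d m n (g 0) (V k) (V (S k)).
Proof.
  intros Hm Hn Hnd H4 HR0 Heta HM Hb Hx0 Hloop.
  set (gs := fun k => g (INR k / INR M)).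
  assert (Hgs : forall k, (k <= M)%nat -> bounded (dK K * d * m) R0 (gs k)) by (intros; apply Hb, in01_grid; auto).
  assert (Hgs0 : gs 0%nat = g 0) by (unfold gs; simpl; unfold Rdiv; rewrite Rmult_0_l; auto).
  pose proof (loop_vertex_inv K d m n M (g 0) gs R0 eta Hm Hn Hnd H4 HR0 Heta Hgs Hgs0 Hx0) as Hinv.
  set (vt := loop_vertex K d m n (g 0) gs eta) in Hinv.
  exists (fun l => if Nat.ltb l M then vt l else g 0). rewrite Nat.ltb_irrefl.
  assert (HV : forall l, (l < M)%nat -> (if Nat.ltb l M then vt l else g 0) = vt l)
    by (intros l Hl; apply Nat.ltb_lt in Hl; rewrite Hl; auto).
  split; [rewrite HV by lia; auto|split; [auto|split]].
  - intros l Hl. destruct (Nat.eq_dec l M) as [->|Hne].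
    + rewrite Nat.ltb_irrefl. split; [apply (bounded_mono _ R0); [lra|apply Hb; unfold in01; lra]|].
      intros i Hi. rewrite Rdiv_diag by (apply not_0_INR; lia). rewrite (Hloop i Hi).
      unfold Rminus; rewrite Rplus_opp_r, Rabs_R0; lra.
    + rewrite HV by lia. destruct (Hinv l Hl) as [? [? _]]. auto.
  - intros k Hk. rewrite HV by lia. destruct (Nat.eq_dec (S k) M) as [<-|Hne].
    + rewrite Nat.ltb_irrefl. intros a b Ha Hb' Hab t HZ.
      destruct (Hinv k ltac:(lia)) as [_ [_ He]]. apply (He a ltac:(lra) t). revert HZ.
      apply common_root_ext. intros; unfold vt; ring.
    + rewrite HV by lia. apply (loop_vertex_step K d m n M (g 0) gs R0 eta); auto. apply Hinv; lia.
Qed.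

Lemma Qspace_near K d m n R1 Lp r y y' : (1 <= m)%nat -> (1 <= n)%nat ->
  (forall y y' t, bounded (dK K * d * m) R1 y -> bounded (dK K * d * m) R1 y' -> Rabs t <= R1 + 1 ->
     defect K d m n y' t <= defect K d m n y t + Lp * dist_sup (dK K * d * m) y y') ->
  bounded (dK K * d * m) R1 y -> bounded (dK K * d * m) R1 y' ->
  (forall t, Rabs t <= R1 + 1 -> r <= defect K d m n y t) -> Lp * dist_sup (dK K * d * m) y' y < r ->
  Qspace K d m n y'.
Proof.
  intros Hm Hn Hlip Hy Hy' Hr Hd. apply (Qspace_of_bounded K d m n R1 y'); auto. intros t Ht.
  apply (no_common_root_near K d m n R1 (R1 + 1) Lp r y); auto.
Qed.

Definition stage1 (u : R) : R := 1 - Rmax 0 (1 - 2 * u).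

Definition stage2 (u : R) : R := Rmax 0 (2 * u - 1).

Lemma cont2_stage1 : cont2 (fun _ u => stage1 u).
Proof.
  apply (cont2_lip_u stage1 2); [lra|]. intros u u' _ _. unfold stage1.
  replace (1 - Rmax 0 (1 - 2 * u) - (1 - Rmax 0 (1 - 2 * u'))) with (- (Rmax 0 (1 - 2 * u) - Rmax 0 (1 - 2 * u'))) by ring.
  rewrite Rabs_Ropp. eapply Rle_trans; [apply Rmax0_lip|].
  replace (1 - 2 * u - (1 - 2 * u')) with (-2 * (u - u')) by ring. rewrite Rabs_mult.
  replace (Rabs (-2)) with 2 by (rewrite Rabs_left; lra). lra.
Qed.

Lemma cont2_stage2 : cont2 (fun _ u => stage2 u).
Proof.
  apply (cont2_lip_u stage2 2); [lra|]. intros u u' _ _. unfold stage2. eapply Rle_trans; [apply Rmax0_lip|].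
  replace (2 * u - 1 - (2 * u' - 1)) with (2 * (u - u')) by ring. rewrite Rabs_mult.
  replace (Rabs 2) with 2 by (rewrite Rabs_pos_eq; lra). lra.
Qed.

(* For [u <= 1/2] slide [g] to the piecewise-linear loop; for [u >= 1/2] contract the
   latter radially onto the base point. *)
Definition loop_homotopy (x0 : nat -> R) (g : R -> nat -> R) M V (s u : R) (i : nat) : R :=
  x0 i + (1 - stage2 u) * ((1 - stage1 u) * g s i + stage1 u * pwlin M V s i - x0 i).

Lemma loop_homotopy_cont N x0 g M V : cont_path N g -> cont_square N (loop_homotopy x0 g M V).
Proof.
  intros Hc. apply cont2_square. intros i Hi. unfold loop_homotopy.
  pose proof cont2_stage1. pose proof cont2_stage2.
  apply cont2_add; [apply cont2_const|]. apply cont2_mul; [apply cont2_sub; [apply cont2_const|auto]|].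
  apply cont2_sub; [|apply cont2_const]. apply cont2_add.
  - apply cont2_mul; [apply cont2_sub; [apply cont2_const|auto]|]. apply (cont2_path N); auto.
  - apply cont2_mul; auto. apply cont2_pwlin.
Qed.

Lemma loop_homotopy_slide x0 g M V s u : u <= 1/2 -> 0 <= u ->
  loop_homotopy x0 g M V s u = fun i => g s i + 2 * u * (pwlin M V s i - g s i).
Proof.
  intros Hu Hu0. apply functional_extensionality. intros i. unfold loop_homotopy, stage1, stage2.
  rewrite Rmax_left, Rmax_right by lra. ring.
Qed.

Lemma loop_homotopy_fan K d m n x0 g M V s u : (1 <= M)%nat -> in01 s -> 1/2 <= u <= 1 ->
  (forall k, (k < M)%nat -> triangle_free K d m n x0 (V k) (V (S k))) ->
  Qspace K d m n (loop_homotopy x0 g M V s u).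
Proof.
  intros HM Hs Hu HVt. set (b := stage2 u). assert (Hb01 : 0 <= b <= 1).
  { unfold b, stage2. split; [apply Rmax_l|]. apply Rmax_lub; lra. }
  destruct (pwlin_seg_exists M s HM Hs) as [k [Hk Hks]].
  set (lam := s * INR M - INR k). assert (Hlam : 0 <= lam <= 1) by (unfold lam; lra).
  apply Qspace_iff. intros t HZ.
  apply (HVt k Hk ((1 - b) * (1 - lam)) ((1 - b) * lam) ltac:(nra) ltac:(nra) ltac:(nra) t).
  revert HZ. apply common_root_ext. intros i _. unfold loop_homotopy. fold b.
  rewrite (pwlin_seg M V k s i Hk Hks). fold lam.
  replace (stage1 u) with 1 by (unfold stage1; rewrite Rmax_left; lra). ring.
Qed.

Lemma loop_homotopy_ends N x0 g M V : (1 <= M)%nat -> V 0%nat = x0 -> V M = x0 ->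
  eqN N (g 0) x0 -> eqN N (g 1) x0 ->
  (forall s, eqN N (loop_homotopy x0 g M V s 0) (g s) /\ eqN N (loop_homotopy x0 g M V s 1) x0) /\
  (forall u, eqN N (loop_homotopy x0 g M V 0 u) x0 /\ eqN N (loop_homotopy x0 g M V 1 u) x0).
Proof.
  intros HM HV0 HVM Hg0 Hg1. unfold loop_homotopy.
  assert (E10 : stage1 0 = 0) by (unfold stage1; rewrite Rmax_right; lra).
  assert (E20 : stage2 0 = 0) by (unfold stage2; rewrite Rmax_left; lra).
  assert (E21 : stage2 1 = 1) by (unfold stage2; rewrite Rmax_right; lra).
  split; [intros s; split; intros i Hi; [rewrite E10, E20|rewrite E21]; ring|].
  intros u; split; intros i Hi.
  - rewrite pwlin_0, HV0, (Hg0 i Hi) by auto. ring.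
  - rewrite pwlin_1, HVM, (Hg1 i Hi) by auto. ring.
Qed.

(* Mesh [1/M] and perturbation size [eta] are chosen so that the piecewise-linear loop
   stays within [5 eps] of [g], well inside the margin [r0] of [g]. *)
Lemma Qspace_loops_contractible K d m n : (1 <= m)%nat -> (1 <= n)%nat -> (n <= d)%nat -> (4 <= dK K * m * n)%nat ->
  forall g, path_in (dK K * d * m) (Qspace K d m n) g -> eqN (dK K * d * m) (g 0) (g 1) ->
     exists H : R -> R -> nat -> R,
       cont_square (dK K * d * m) H /\
       (forall s u, in01 s -> in01 u -> Qspace K d m n (H s u)) /\
       (forall s, in01 s -> eqN (dK K * d * m) (H s 0) (g s) /\ eqN (dK K * d * m) (H s 1) (g 0)) /\
       (forall u, in01 u -> eqN (dK K * d * m) (H 0 u) (g 0) /\ eqN (dK K * d * m) (H 1 u) (g 0)).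
Proof.
  intros Hm Hn Hnd H4 g [Hc HQ] Hloop.
  set (N := (dK K * d * m)%nat). fold N in Hc, Hloop |- *.
  destruct (path_bound N g Hc) as [R0 [HR0 Hb]]. set (R1 := R0 + 4).
  assert (Hb1 : forall s, in01 s -> bounded N R1 (g s)) by (intros; apply (bounded_mono N R0); [unfold R1; lra|auto]).
  destruct (defect_margin K d m n R1 g Hm Hn ltac:(unfold R1; lra) Hc Hb1) as [r0 [Hr0 Hmarg]].
  { intros s Hs t. apply no_common_root_of_Qspace; auto. }
  destruct (defect_lipschitz_pt K d m n R1 (R1 + 1)) as [Lp [HLp Hlip]].
  destruct (small_weight r0 (Lp * 5)) as [eps [[Heps _] Heps5]]; [auto|lra|].
  destruct (path_unif_cont N g Hc eps Heps) as [delta [Hdelta Hunif]].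
  destruct (exists_mesh delta Hdelta) as [M [HM HMd]].
  set (eta := Rmin 1 eps).
  assert (Heta : 0 < eta <= 1) by (unfold eta; split; [apply Rmin_glb_lt; lra|apply Rmin_l]).
  assert (Heta2 : eta <= eps) by apply Rmin_r.
  assert (Hg0 : Qspace K d m n (g 0)) by (apply HQ; unfold in01; lra).
  destruct (loop_vertices K d m n g R0 M eta Hm Hn Hnd H4 HR0 Heta HM Hb Hg0 Hloop) as [V [HV0 [HVM [HVb HVt]]]].
  destruct (loop_homotopy_ends N (g 0) g M V HM HV0 HVM (fun i _ => eq_refl) (fun i Hi => eq_sym (Hloop i Hi)))
    as [Hends_s Hends_u].
  exists (loop_homotopy (g 0) g M V). split; [apply loop_homotopy_cont; auto|split; [|split; intros; auto]].
  intros s u Hs Hu. destruct (Rle_dec u (1/2)) as [Hu2|Hu2]; [|apply loop_homotopy_fan; unfold in01 in *; auto; lra].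
  assert (Hclose : forall i, (i < N)%nat -> Rabs (pwlin M V s i - g s i) <= 5 * eps).
  { apply (pwlin_near N M V g); auto. intros l i Hl Hsl Hi. destruct (HVb l Hl) as [_ HVl].
    assert (Rabs (g (INR l / INR M) i - g s i) <= eps)
      by (apply Hunif; auto; [apply in01_grid; auto|rewrite <- Rabs_Ropp, Ropp_minus_distr; lra]).
    replace (V l i - g s i) with ((V l i - g (INR l / INR M) i) + (g (INR l / INR M) i - g s i)) by ring.
    eapply Rle_trans; [apply Rabs_triang|]. specialize (HVl i Hi). lra. }
  unfold in01 in Hu. rewrite loop_homotopy_slide by lra.
  apply (Qspace_near K d m n R1 Lp r0 (g s)); auto.
  - apply bounded_segment; [lra|auto|]. apply bounded_pwlin; auto. intros l Hl. apply HVb; auto.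
  - eapply Rle_lt_trans; [|apply Heps5]. rewrite Rmult_assoc. apply Rmult_le_compat_l; auto.
    eapply Rle_trans; [apply (dist_sup_add_scaled N _ _ (2 * u) (5 * eps)); auto; lra|]. nra.
Qed.

Lemma Qspace_simply_connected_le K d m n : (1 <= m)%nat -> (1 <= n)%nat -> (n <= d)%nat -> (4 <= dK K * m * n)%nat ->
  simply_connected (dK K * d * m) (Qspace K d m n).
Proof.
  intros Hm Hn Hnd H4. split; [apply Qspace_nonempty; auto|split].
  - apply Qspace_path_connected; auto.
  - apply Qspace_loops_contractible; auto.
Qed.

Lemma Qspace_simply_connected_gt K d m n : (1 <= m)%nat -> (d < n)%nat ->
  simply_connected (dK K * d * m) (Qspace K d m n).
Proof.
  intros Hm Hdn.
  assert (HQ : forall y, Qspace K d m n y) by (intros y; apply Qspace_iff; intros t; apply no_common_root_of_lt; auto).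
  set (N := (dK K * d * m)%nat).
  split; [exists (fun _ => 0); auto|split].
  - intros x y _ _. destruct (bounded_pair N x y) as [R0 [HR0 [Hbx Hby]]].
    exists (fun s i => x i + s * (y i - x i)). split; [split|split].
    + apply (cont_path_segment _ R0); auto.
    + intros; auto.
    + intros i _. ring.
    + intros i _. ring.
  - intros g [Hc _] Hloop. exists (fun s u i => (1 - u) * g s i + u * g 0 i). split; [|split; [|split]].
    + apply cont2_square. intros i Hi. apply cont2_add; apply cont2_mul.
      * apply (cont2_lip_u (fun u => 1 - u) 1); [lra|]. intros. replace (1 - s - (1 - s')) with (- (s - s')) by ring.
        rewrite Rabs_Ropp; lra.
      * apply (cont2_path N); auto.
      * apply (cont2_lip_u (fun u => u) 1); [lra|]. intros. lra.
      * apply cont2_const.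
    + intros; auto.
    + intros s _. split; intros i _; ring.
    + intros u _. split; intros i Hi; [ring|]. rewrite <- (Hloop i Hi). ring.
Qed.

Theorem lemma6p1 (K : Kfield) (d m n : nat) :
  (1 <= d)%nat -> (1 <= m)%nat -> (1 <= n)%nat -> ~ (m = 1%nat /\ n = 1%nat) ->
  (4 <= dK K * m * n)%nat ->
  simply_connected (dK K * d * m) (Qspace K d m n).
Proof.
  intros _ Hm Hn _ H4. destruct (le_lt_dec n d) as [Hnd|Hdn].
  - apply Qspace_simply_connected_le; auto.
  - apply Qspace_simply_connected_gt; auto.
Qed.
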